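(* Let $\alpha>1$, and suppose that both $f$ and $Pf$ belong to $\mathcal{M}_\alpha$. Then for all $x>0$, $(Vf)(x)=(P(Pf))(x)$, i.e. the Voronoi operator equals the iterated Müntz operator $P^2$.
   Context: For $\alpha>1$, $\mathcal{M}_\alpha$ denotes the class of functions $f:[0,\infty)\to\mathbb{C}$ with $f\in C^{2}[0,\infty)$ and $f^{(j)}(x)=O(x^{-\alpha-j})$ as $x\to\infty$ for $j=0,1,2$. The Müntz operator is $(Pf)(x)=\sum_{n=1}^\infty f(nx)-\frac1x\int_0^\infty f(y)\,dy$, $x>0$ (extended continuously to $x=0$ when it is required to lie in $\mathcal{M}_\alpha$). The Voronoi operator is $(Vf)(x)=\sum_{n=1}^\infty d(n)f(nx)-\int_0^\infty f(xy)(\log y+2\gamma)\,dy$, where $d(n)$ is the number of divisors of $n$ and $\gamma$ is Euler's constant. *)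

From Stdlib Require Import Reals Lra Lia Arith List.
Import ListNotations.
Open Scope R_scope.

Definition ndiv (n : nat) : nat :=
  length (filter (fun k => Nat.eqb (Nat.modulo n k) 0) (seq 1 n)).

Definition is_euler_gamma (g : R) : Prop :=
  Un_cv (fun n => sum_f_R0 (fun k => / INR (k + 1)) n - ln (INR (n + 1))) g.

Definition right_deriv (f : R -> R) (x l : R) : Prop :=
  forall eps, 0 < eps -> exists delta, 0 < delta /\
    forall h, 0 < h -> h < delta -> Rabs ((f (x + h) - f x) / h - l) < eps.

Definition cont_nonneg (g : R -> R) (x : R) : Prop :=
  forall eps, 0 < eps -> exists delta, 0 < delta /\
    forall y, 0 <= y -> Rabs (y - x) < delta -> Rabs (g y - g x) < eps.

(* The class M_alpha for a real-valued f on [0,oo):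
   f in C^2[0,oo) (one-sided derivatives at 0, f'' continuous on [0,oo)),
   and f^(j)(x) = O(x^(-alpha-j)) as x -> oo, j = 0,1,2. *)
Definition M_alpha (alpha : R) (f : R -> R) : Prop :=
  exists f1 f2 : R -> R,
    (forall x, 0 < x -> derivable_pt_lim f x (f1 x)) /\
    (forall x, 0 < x -> derivable_pt_lim f1 x (f2 x)) /\
    right_deriv f 0 (f1 0) /\ right_deriv f1 0 (f2 0) /\
    (forall x, 0 <= x -> cont_nonneg f2 x) /\
    (exists C X, 0 < X /\ forall x, X <= x ->
        Rabs (f x) <= C * Rpower x (- alpha) /\
        Rabs (f1 x) <= C * Rpower x (- alpha - 1) /\
        Rabs (f2 x) <= C * Rpower x (- alpha - 2)).

(* Complex-valued f = fr + i fi is in M_alpha iff both parts are. *)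
Definition M_alpha_C (alpha : R) (fr fi : R -> R) : Prop :=
  M_alpha alpha fr /\ M_alpha alpha fi.

Definition improper_int (h : R -> R) (I : R) : Prop :=
  (forall a b, 0 < a -> a <= b -> inhabited (Riemann_integrable h a b)) /\
  forall eps, 0 < eps -> exists d M, 0 < d /\ 0 < M /\
    forall a b (pr : Riemann_integrable h a b),
      0 < a -> a < d -> M < b -> Rabs (RiemannInt pr - I) < eps.

Definition Muntz_at (f : R -> R) (x y : R) : Prop :=
  exists S I, infinite_sum (fun n => f (INR (n + 1) * x)) S /\
    improper_int f I /\ y = S - I / x.

Definition Voronoi_at (gamma : R) (f : R -> R) (x y : R) : Prop :=
  exists S I,
    infinite_sum (fun n => INR (ndiv (n + 1)) * f (INR (n + 1) * x)) S /\
    improper_int (fun t => f (x * t) * (ln t + 2 * gamma)) I /\ y = S - I.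


(* Write prim f t for the integral of f over [0, t] and avg f t := prim f t / t.

   Since g := Pf and the series sum_n f(ny) are both O(y^-alpha) with alpha > 1, the
   term (1/y) int_0^oo f in Pf must vanish: int_0^oo f = 0 and g(y) = sum_n f(ny).  In
   particular the 2 gamma part of the Voronoi integral is zero, whatever gamma is.

   Integrating g(y) = sum_n f(ny) termwise, int_a^b g = sum_n (prim f (nb) - prim f (na)) / n.
   As b -> oo the prim f (nb) part tends to 0, and as a -> 0 the remaining series
   sum_n a avg f (na) is a Riemann sum of avg f, which is Lipschitz with constant
   O((1+t)^-2).  Hence int_0^oo g = - int_0^oo avg f.  Integrating by parts with the
   antiderivative prim f (xt) (ln t + 2 gamma) / x shows that the Voronoi integral
   int_0^oo f(xt) (ln t + 2 gamma) dt equals - (1/x) int_0^oo avg f as well.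

   Finally sum_k d(k) f(kx) = sum_m sum_n f(mnx) = sum_m g(mx); the rearrangement is
   justified by |f(mnx)| <= C m^-alpha n^-alpha, splitting the divisor sum at sqrt K
   (hyperbola method).  Both sides of Vf = P(Pf) are therefore
   sum_m g(mx) + (1/x) int_0^oo avg f. *)

From Stdlib Require Import Reals Lra Lia List Psatz.
From Coquelicot Require Import Coquelicot.
Open Scope R_scope.

(** * Powers and the p-series *)

Lemma Rpower_pos x c : 0 < Rpower x c.
Proof. apply exp_pos. Qed.

Lemma Rpower_1_l c : Rpower 1 c = 1.
Proof. unfold Rpower. rewrite ln_1, Rmult_0_r, exp_0. reflexivity. Qed.

Lemma Rpower_le_base_nonpos c x y : c <= 0 -> 0 < x <= y -> Rpower y c <= Rpower x c.
Proof.
  intros Hc [Hx Hxy]. unfold Rpower.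
  assert (ln x <= ln y) by (apply ln_le; lra).
  destruct (Req_dec (c * ln y) (c * ln x)) as [->|Hne]; [lra|].
  left. apply exp_increasing. nra.
Qed.

Lemma Rpower_le_1 c x : c <= 0 -> 1 <= x -> Rpower x c <= 1.
Proof. intros. rewrite <- (Rpower_O x) by lra. apply Rle_Rpower; lra. Qed.

Lemma Rpower_pred_expo x c : 0 < x -> Rpower x (c - 1) = Rpower x c / x.
Proof.
  intros Hx. unfold Rminus. rewrite Rpower_plus, Rpower_Ropp, Rpower_1 by exact Hx. reflexivity.
Qed.

Lemma Rpower_1_minus x c : 0 < x -> Rpower x (1 - c) = x * Rpower x (- c).
Proof. intros Hx. unfold Rminus. rewrite Rpower_plus, Rpower_1 by exact Hx. reflexivity. Qed.

Lemma is_derive_Rpower c x : 0 < x -> is_derive (fun t => Rpower t c) x (c * Rpower x (c - 1)).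
Proof. intros. apply is_derive_Reals, derivable_pt_lim_power; assumption. Qed.

Lemma Rpower_eventually_lt eps c : 0 < eps -> c < 0 ->
  exists Y, 0 < Y /\ forall y, Y <= y -> Rpower y c < eps.
Proof.
  intros He Hc. pose proof (exp_pos (ln eps / c)).
  exists (exp (ln eps / c) + 1). split; [lra|].
  intros y Hy. unfold Rpower. rewrite <- (exp_ln eps) by exact He. apply exp_increasing.
  assert (Hln : ln (exp (ln eps / c)) < ln y) by (apply ln_increasing; lra).
  rewrite ln_exp in Hln.
  replace (ln eps) with (c * (ln eps / c)) by (field; lra). nra.
Qed.

Lemma Rpower_le_increment al k : 1 < al -> 0 < k ->
  Rpower (k + 1) (- al) <= (Rpower k (1 - al) - Rpower (k + 1) (1 - al)) / (al - 1).
Proof.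
  intros Hal Hk.
  destruct (MVT_gen (fun t => Rpower t (1 - al)) k (k + 1)
              (fun t => (1 - al) * Rpower t (1 - al - 1))) as [c [Hc Heq]].
  - intros t Ht. rewrite Rmin_left in Ht by lra. apply is_derive_Rpower. lra.
  - intros t Ht. rewrite Rmin_left in Ht by lra. apply derivable_continuous_pt.
    exists ((1 - al) * Rpower t (1 - al - 1)). apply derivable_pt_lim_power. lra.
  - rewrite Rmin_left, Rmax_right in Hc by lra.
    cbv beta in Heq. replace (1 - al - 1) with (- al) in Heq by ring.
    assert (Hc' : Rpower (k + 1) (- al) <= Rpower c (- al)) by (apply Rpower_le_base_nonpos; lra).
    assert (E : Rpower k (1 - al) - Rpower (k + 1) (1 - al) = (al - 1) * Rpower c (- al)).
    { replace (Rpower k (1 - al) - Rpower (k + 1) (1 - al))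
        with (- (Rpower (k + 1) (1 - al) - Rpower k (1 - al))) by ring.
      rewrite Heq. ring. }
    rewrite E.
    unfold Rdiv. rewrite Rmult_comm, <- Rmult_assoc, Rinv_l, Rmult_1_l by lra. exact Hc'.
Qed.

Lemma is_RInt_Rpower al t b : 1 < al -> 0 < t <= b ->
  is_RInt (fun u => Rpower u (- al)) t b ((Rpower t (1 - al) - Rpower b (1 - al)) / (al - 1)).
Proof.
  intros Hal Htb.
  replace ((Rpower t (1 - al) - Rpower b (1 - al)) / (al - 1)) with
    (minus (Rpower b (1 - al) / (1 - al)) (Rpower t (1 - al) / (1 - al)))
    by (unfold minus, plus, opp; simpl; field; lra).
  apply (is_RInt_derive (fun u => Rpower u (1 - al) / (1 - al))).
  - intros x Hx. rewrite Rmin_left, Rmax_right in Hx by lra.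
    replace (Rpower x (- al)) with (/ (1 - al) * ((1 - al) * Rpower x (1 - al - 1)))
      by (replace (1 - al - 1) with (- al) by ring; field; lra).
    eapply is_derive_ext; [intros; apply Rmult_comm|].
    apply is_derive_scal, is_derive_Rpower. lra.
  - intros x Hx. rewrite Rmin_left, Rmax_right in Hx by lra.
    apply continuity_pt_filterlim, derivable_continuous_pt.
    exists (- al * Rpower x (- al - 1)). apply derivable_pt_lim_power. lra.
Qed.

Lemma ln_nonneg b : 1 <= b -> 0 <= ln b.
Proof. intros Hb. rewrite <- ln_1. apply ln_le; lra. Qed.

Lemma ln_mul_Rpower_eventually_lt c K eps : c < 0 -> 0 <= K -> 0 < eps ->
  exists Y, 1 <= Y /\ forall b, Y <= b -> (ln b + K) * Rpower b c < eps.
Proof.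
  intros Hc HK He. set (e := - c / 2).
  assert (He0 : 0 < e) by (unfold e; lra). pose proof (Rinv_0_lt_compat e He0).
  destruct (Rpower_eventually_lt (eps / (/ e + K + 1)) (c / 2)) as [Y [HY HYy]].
  { apply Rdiv_lt_0_compat; lra. } { lra. }
  exists (Rmax 1 Y). split; [apply Rmax_l|]. intros b Hb.
  pose proof (Rmax_l 1 Y). pose proof (Rmax_r 1 Y).
  pose proof (ln_nonneg b ltac:(lra)).
  (* 1 + u <= exp u with u = e ln b *)
  assert (Hln : ln b <= Rpower b e / e).
  { unfold Rpower. pose proof (exp_ineq1_le (e * ln b)).
    apply Rmult_le_reg_r with e; [lra|]. unfold Rdiv. rewrite Rmult_assoc, Rinv_l by lra. nra. }
  assert (E : Rpower b e * Rpower b c = Rpower b (c / 2)) by (rewrite <- Rpower_plus; f_equal; unfold e; field).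
  assert (Hpc : Rpower b c <= Rpower b (c / 2)) by (apply Rle_Rpower; lra).
  pose proof (Rpower_pos b c). pose proof (Rpower_pos b (c / 2)).
  specialize (HYy b ltac:(lra)).
  apply Rle_lt_trans with ((/ e + K) * Rpower b (c / 2)).
  - rewrite !Rmult_plus_distr_r. apply Rplus_le_compat; [|apply Rmult_le_compat_l; lra].
    rewrite <- E. unfold Rdiv in Hln.
    replace (/ e * (Rpower b e * Rpower b c)) with ((Rpower b e * / e) * Rpower b c) by ring.
    apply Rmult_le_compat_r; lra.
  - set (Q := / e + K + 1) in *. assert (HQ : 0 < Q) by (unfold Q; lra).
    apply Rle_lt_trans with (Q * Rpower b (c / 2)); [unfold Q; nra|].
    replace eps with (Q * (eps / Q)) by (field; lra).
    apply Rmult_lt_compat_l; lra.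
Qed.

Lemma mul_ln_near_0_lt K eps : 0 <= K -> 0 < eps ->
  exists del, 0 < del /\ del <= 1 /\ forall a, 0 < a < del -> a * (Rabs (ln a) + K) < eps.
Proof.
  intros HK He. set (q := eps / (2 + K)).
  assert (Hq : 0 < q) by (unfold q; apply Rdiv_lt_0_compat; lra).
  exists (Rmin 1 (q * q)). split; [apply Rmin_case; nra|]. split; [apply Rmin_l|].
  intros a [Ha Had]. pose proof (Rmin_l 1 (q * q)). pose proof (Rmin_r 1 (q * q)).
  set (s := sqrt a).
  assert (Hs : 0 < s) by (apply sqrt_lt_R0; lra).
  assert (Hss : s * s = a) by (apply sqrt_sqrt; lra).
  assert (Hs1 : s < 1) by (apply Rnot_le_lt; intro; nra).
  assert (Hsq : s < q) by (apply Rnot_le_lt; intro; nra).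
  (* |ln a| = 2 ln (1/s) < 2/s *)
  assert (Hl : Rabs (ln a) < 2 / s).
  { rewrite Rabs_left by (rewrite <- ln_1; apply ln_increasing; lra).
    rewrite <- Hss, ln_mult by lra.
    assert (Hinv : 0 < / s) by (apply Rinv_0_lt_compat; lra).
    pose proof (exp_ineq1_le (ln (/ s))) as Hexp. rewrite exp_ln in Hexp by exact Hinv.
    rewrite ln_Rinv in Hexp by lra. unfold Rdiv. lra. }
  assert (a * Rabs (ln a) < 2 * s).
  { apply Rlt_le_trans with (a * (2 / s)); [apply Rmult_lt_compat_l; lra|].
    rewrite <- Hss. right. field. lra. }
  assert (a <= s) by nra.
  apply Rle_lt_trans with ((2 + K) * s); [nra|].
  replace eps with ((2 + K) * q) by (unfold q; field; lra). apply Rmult_lt_compat_l; lra.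
Qed.

Fixpoint sumN (F : nat -> R) (n : nat) : R :=
  match n with O => 0 | S k => sumN F k + F k end.

Definition sumN_from (r : nat) (F : nat -> R) (n : nat) : R :=
  sumN (fun m => if (r <=? m)%nat then F m else 0) n.

Lemma sumN_S F n : sumN F (S n) = sumN F n + F n.
Proof. reflexivity. Qed.

Lemma sumN_sum_f_R0 F n : sum_f_R0 F n = sumN F (S n).
Proof. induction n as [|n IH]; simpl in *; [ring|rewrite IH; ring]. Qed.

Lemma sumN_ext F G n : (forall i, (i < n)%nat -> F i = G i) -> sumN F n = sumN G n.
Proof. induction n as [|n IH]; intros H; simpl; [reflexivity|]. rewrite IH, H; auto. Qed.

Lemma sumN_plus F G n : sumN (fun i => F i + G i) n = sumN F n + sumN G n.
Proof. induction n as [|n IH]; simpl; [ring|rewrite IH; ring]. Qed.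

Lemma sumN_minus F G n : sumN (fun i => F i - G i) n = sumN F n - sumN G n.
Proof. induction n as [|n IH]; simpl; [ring|rewrite IH; ring]. Qed.

Lemma sumN_scal K F n : sumN (fun i => K * F i) n = K * sumN F n.
Proof. induction n as [|n IH]; simpl; [ring|rewrite IH; ring]. Qed.

Lemma sumN_abs_le F G n : (forall i, (i < n)%nat -> Rabs (F i) <= G i) -> Rabs (sumN F n) <= sumN G n.
Proof.
  induction n as [|n IH]; intros H; simpl; [rewrite Rabs_R0; lra|].
  pose proof (H n (Nat.lt_succ_diag_r n)).
  assert (Rabs (sumN F n) <= sumN G n) by (apply IH; intros; apply H; lia).
  pose proof (Rabs_triang (sumN F n) (F n)). lra.
Qed.

Lemma sumN_from_scal r K F n : sumN_from r (fun m => K * F m) n = K * sumN_from r F n.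
Proof. unfold sumN_from. rewrite <- sumN_scal. apply sumN_ext. intros. destruct (r <=? i)%nat; ring. Qed.

Lemma sumN_from_0 F n : sumN_from 0 F n = sumN F n.
Proof. reflexivity. Qed.

Lemma sumN_sub N M F : (N <= M)%nat -> sumN F M - sumN F N = sumN_from N F M.
Proof.
  unfold sumN_from. induction M as [|M IH]; intros H.
  - replace N with 0%nat by lia. simpl. ring.
  - destruct (Nat.eq_dec N (S M)) as [->|Hne].
    + rewrite Rminus_diag, (sumN_ext _ (fun _ => 0)).
      * clear. induction (S M) as [|k IH]; simpl; [reflexivity|rewrite <- IH; ring].
      * intros i Hi. replace (S M <=? i)%nat with false by (symmetry; apply Nat.leb_gt; lia). reflexivity.
    + simpl. rewrite <- IH by lia. replace (N <=? M)%nat with true by (symmetry; apply Nat.leb_le; lia). ring.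
Qed.

Definition pterm (al : R) (i : nat) : R := Rpower (INR i + 1) (- al).

Definition zeta_bound (al : R) : R := 1 + 1 / (al - 1).

Lemma zeta_bound_pos al : 1 < al -> 0 < zeta_bound al.
Proof. intros. unfold zeta_bound. assert (0 < 1 / (al - 1)) by (apply Rdiv_lt_0_compat; lra). lra. Qed.

Lemma INR_add1 n : INR (n + 1) = INR n + 1.
Proof. rewrite plus_INR. reflexivity. Qed.

Lemma sumN_from_pterm_le al r M : 1 < al -> (1 <= r)%nat ->
  sumN_from r (pterm al) M <= Rpower (INR r) (1 - al) / (al - 1).
Proof.
  intros Hal Hr. unfold sumN_from.
  assert (H : sumN (fun m => if (r <=? m)%nat then pterm al m else 0) M <=
              (Rpower (INR r) (1 - al) - Rpower (INR (Nat.max r M)) (1 - al)) / (al - 1)).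
  { induction M as [|M IH].
    - simpl. rewrite Nat.max_0_r. unfold Rdiv. rewrite Rminus_diag. lra.
    - rewrite sumN_S. destruct (r <=? M)%nat eqn:E.
      + apply Nat.leb_le in E. rewrite Nat.max_r in IH by lia. rewrite Nat.max_r by lia.
        assert (0 < INR M) by (apply lt_0_INR; lia).
        pose proof (Rpower_le_increment al (INR M) Hal H) as Hinc. fold (pterm al M) in Hinc.
        rewrite S_INR.
        unfold Rdiv in *. rewrite Rmult_minus_distr_r in *. lra.
      + apply Nat.leb_gt in E. rewrite Nat.max_l in IH by lia. rewrite Nat.max_l by lia. lra. }
  eapply Rle_trans; [exact H|]. pose proof (Rpower_pos (INR (Nat.max r M)) (1 - al)).
  apply Rmult_le_compat_r; [apply Rlt_le, Rinv_0_lt_compat; lra|lra].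
Qed.

Lemma sumN_pterm_le al M : 1 < al -> sumN (pterm al) M <= zeta_bound al.
Proof.
  intros Hal.
  assert (H : sumN (pterm al) M <= 1 + sumN_from 1 (pterm al) M).
  { unfold sumN_from. induction M as [|M IH]; simpl; [lra|]. destruct M as [|M].
    - unfold pterm. simpl. rewrite !Rplus_0_l, Rpower_1_l. lra.
    - simpl in IH |- *. lra. }
  pose proof (sumN_from_pterm_le al 1 M Hal (le_n _)). simpl INR in H0. rewrite Rpower_1_l in H0.
  unfold zeta_bound. lra.
Qed.

(* Uniform bound for the tail sum_(m >= N) of the p-series, also valid for N = 0. *)
Definition pterm_tail (al : R) (N : nat) : R :=
  if Nat.eqb N 0 then zeta_bound al else Rpower (INR N) (1 - al) / (al - 1).

Lemma sumN_from_pterm_tail al N M : 1 < al -> sumN_from N (pterm al) M <= pterm_tail al N.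
Proof.
  intros Hal. unfold pterm_tail. destruct (Nat.eqb N 0) eqn:E.
  - apply Nat.eqb_eq in E. subst N. rewrite sumN_from_0. apply sumN_pterm_le, Hal.
  - apply Nat.eqb_neq in E. apply sumN_from_pterm_le; [exact Hal|lia].
Qed.

Lemma pterm_tail_le_zeta al N : 1 < al -> pterm_tail al N <= zeta_bound al.
Proof.
  intros Hal. unfold pterm_tail. destruct (Nat.eqb N 0) eqn:E; [lra|].
  apply Nat.eqb_neq in E. assert (1 <= INR N) by (apply (le_INR 1); lia).
  assert (Rpower (INR N) (1 - al) <= 1) by (apply Rpower_le_1; lra).
  unfold zeta_bound, Rdiv. assert (0 < / (al - 1)) by (apply Rinv_0_lt_compat; lra). nra.
Qed.

Lemma pterm_tail_le al N r : 1 < al -> (1 <= r <= N)%nat ->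
  pterm_tail al N <= Rpower (INR r) (1 - al) / (al - 1).
Proof.
  intros Hal Hr. unfold pterm_tail. replace (Nat.eqb N 0) with false by (symmetry; apply Nat.eqb_neq; lia).
  apply Rmult_le_compat_r; [apply Rlt_le, Rinv_0_lt_compat; lra|].
  apply Rpower_le_base_nonpos; [lra|]. split; [apply lt_0_INR; lia|apply le_INR; lia].
Qed.

(** * Series and improper integrals *)

Lemma infinite_sum_sumN u l : infinite_sum u l <->
  (forall eps, 0 < eps -> exists N, forall n, (N <= n)%nat -> Rabs (sumN u n - l) < eps).
Proof.
  split.
  - intros H eps He. destruct (H eps He) as [N HN]. exists (S N). intros n Hn.
    destruct n as [|k]; [lia|]. rewrite <- sumN_sum_f_R0. apply HN. lia.
  - intros H eps He. destruct (H eps He) as [N HN]. exists N. intros n Hn.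
    unfold R_dist. rewrite sumN_sum_f_R0. apply HN. lia.
Qed.

Lemma infinite_sum_ext u v l : (forall n, u n = v n) -> infinite_sum u l -> infinite_sum v l.
Proof.
  intros E Hs. apply infinite_sum_sumN. intros eps He.
  destruct (proj1 (infinite_sum_sumN u l) Hs eps He) as [N HN].
  exists N. intros n Hn. rewrite <- (sumN_ext u v n) by (intros; apply E). apply HN, Hn.
Qed.

Lemma infinite_sum_minus u v lu lv : infinite_sum u lu -> infinite_sum v lv ->
  infinite_sum (fun n => u n - v n) (lu - lv).
Proof.
  intros Hu Hv. apply infinite_sum_sumN. intros eps He.
  destruct (proj1 (infinite_sum_sumN u lu) Hu (eps / 2) ltac:(lra)) as [N1 H1].
  destruct (proj1 (infinite_sum_sumN v lv) Hv (eps / 2) ltac:(lra)) as [N2 H2].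
  exists (Nat.max N1 N2). intros n Hn. rewrite sumN_minus.
  specialize (H1 n ltac:(lia)). specialize (H2 n ltac:(lia)).
  pose proof (Rabs_triang (sumN u n - lu) (- (sumN v n - lv))) as T. rewrite Rabs_Ropp in T.
  replace (sumN u n - lu + - (sumN v n - lv)) with (sumN u n - sumN v n - (lu - lv)) in T by ring.
  lra.
Qed.

Lemma infinite_sum_tail_le u l c N T : infinite_sum u l -> (forall n, Rabs (u n) <= c n) ->
  (forall M, sumN_from N c M <= T) -> Rabs (l - sumN u N) <= T.
Proof.
  intros Hs Hc HT. apply Rnot_lt_le. intros Hlt.
  set (eps := Rabs (l - sumN u N) - T).
  destruct (proj1 (infinite_sum_sumN u l) Hs eps ltac:(unfold eps; lra)) as [n0 Hn0].
  set (n := Nat.max n0 N). specialize (Hn0 n ltac:(unfold n; lia)).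
  assert (Rabs (sumN u n - sumN u N) <= T).
  { rewrite sumN_sub by (unfold n; lia). eapply Rle_trans; [|apply (HT n)].
    apply sumN_abs_le. intros i _. destruct (N <=? i)%nat; [apply Hc|].
    rewrite Rabs_R0. specialize (Hc 0%nat). pose proof (Rabs_pos (u 0%nat)). lra. }
  pose proof (Rabs_triang (l - sumN u n) (sumN u n - sumN u N)) as T2.
  replace (l - sumN u n + (sumN u n - sumN u N)) with (l - sumN u N) in T2 by ring.
  rewrite Rabs_minus_sym in Hn0. unfold eps in *. lra.
Qed.

Lemma infinite_sum_abs_le u l c T : infinite_sum u l -> (forall n, Rabs (u n) <= c n) ->
  (forall M, sumN c M <= T) -> Rabs l <= T.
Proof.
  intros Hs Hc HT. replace l with (l - sumN u 0) by (simpl; ring).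
  apply (infinite_sum_tail_le u l c 0 T Hs Hc). intros M. rewrite sumN_from_0. apply HT.
Qed.

Lemma infinite_sum_pterm_le al u l K : 1 < al -> infinite_sum u l ->
  (forall n, Rabs (u n) <= K * pterm al n) -> Rabs l <= K * zeta_bound al.
Proof.
  intros Hal Hs Hu.
  assert (HK : 0 <= K).
  { specialize (Hu 0%nat). pose proof (Rpower_pos (INR 0 + 1) (- al)).
    pose proof (Rabs_pos (u 0%nat)). unfold pterm in Hu. nra. }
  apply (infinite_sum_abs_le u l _ _ Hs Hu). intros M. rewrite sumN_scal.
  apply Rmult_le_compat_l; [exact HK|apply sumN_pterm_le, Hal].
Qed.

Lemma ex_infinite_sum_pterm al u K : 1 < al -> (forall n, Rabs (u n) <= K * pterm al n) ->
  exists l, infinite_sum u l.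
Proof.
  intros Hal Hu.
  assert (HK : 0 <= K).
  { specialize (Hu 0%nat). pose proof (Rpower_pos (INR 0 + 1) (- al)).
    pose proof (Rabs_pos (u 0%nat)). unfold pterm in Hu. nra. }
  assert (Hc : Cauchy_crit (sum_f_R0 u)).
  { intros eps He.
    destruct (Rpower_eventually_lt (eps * (al - 1) / (K + 1)) (1 - al)) as [Y [HY HYy]].
    { apply Rdiv_lt_0_compat; [nra|lra]. } { lra. }
    destruct (INR_unbounded Y) as [N HN].
    assert (Hgen : forall a b, (S N <= a <= b)%nat -> Rabs (sumN u b - sumN u a) < eps).
    { intros a b Hab. rewrite sumN_sub by lia.
      eapply Rle_lt_trans.
      { apply (sumN_abs_le _ (fun m => if (a <=? m)%nat then K * pterm al m else 0)).
        intros i _. destruct (a <=? i)%nat; [apply Hu|rewrite Rabs_R0; lra]. }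
      fold (sumN_from a (fun m => K * pterm al m) b). rewrite sumN_from_scal.
      pose proof (sumN_from_pterm_le al a b Hal ltac:(lia)) as Htail.
      assert (HaY : Y <= INR a) by (apply Rle_trans with (INR (S N)); [rewrite S_INR; lra|apply le_INR; lia]).
      specialize (HYy _ HaY).
      pose proof (Rpower_pos (INR a) (1 - al)).
      apply Rle_lt_trans with ((K + 1) * (Rpower (INR a) (1 - al) / (al - 1))).
      { apply Rle_trans with (K * (Rpower (INR a) (1 - al) / (al - 1))).
        - apply Rmult_le_compat_l; assumption.
        - apply Rmult_le_compat_r; [apply Rlt_le, Rdiv_lt_0_compat; lra|lra]. }
      replace eps with ((K + 1) * (eps * (al - 1) / (K + 1) / (al - 1))) by (field; lra).
      apply Rmult_lt_compat_l; [lra|]. apply Rmult_lt_compat_r; [apply Rinv_0_lt_compat; lra|exact HYy]. }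
    exists (S N). intros n m Hn Hm. unfold R_dist. rewrite !sumN_sum_f_R0.
    destruct (Nat.le_ge_cases (S n) (S m)).
    - rewrite Rabs_minus_sym. apply Hgen. lia.
    - apply Hgen. lia. }
  destruct (Rcomplete.R_complete _ Hc) as [l Hl]. exists l. exact Hl.
Qed.

Lemma improper_int_intro h L :
  (forall a b, 0 < a -> a <= b -> ex_RInt h a b) ->
  (forall eps, 0 < eps -> exists d M, 0 < d /\ 0 < M /\
      forall a b, 0 < a -> a < d -> M < b -> a <= b -> Rabs (RInt h a b - L) < eps) ->
  improper_int h L.
Proof.
  intros Hex Hlim. split.
  - intros a b Ha Hab. constructor. apply ex_RInt_Reals_0, Hex; assumption.
  - intros eps He. destruct (Hlim eps He) as [d [M [Hd [HM H]]]].
    exists d, (Rmax M d). split; [exact Hd|]. split; [apply Rlt_le_trans with M; [exact HM|apply Rmax_l]|].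
    intros a b pr Ha Had Hb. pose proof (Rmax_l M d). pose proof (Rmax_r M d).
    rewrite <- RInt_Reals. apply H; lra.
Qed.

Lemma improper_int_approx h L : improper_int h L ->
  forall eps, 0 < eps -> exists d M, 0 < d /\ 0 < M /\
      forall a b, 0 < a -> a < d -> M < b -> a <= b -> Rabs (RInt h a b - L) < eps.
Proof.
  intros [Hi Hl] eps He. destruct (Hl eps He) as [d [M [Hd [HM H]]]]. exists d, M.
  split; [exact Hd|]. split; [exact HM|]. intros a b Ha Had Hb Hab.
  destruct (Hi a b Ha Hab) as [pr]. rewrite (RInt_Reals h a b pr). auto.
Qed.

Lemma improper_int_ext h1 h2 L : (forall t, 0 < t -> h1 t = h2 t) ->
  improper_int h1 L -> improper_int h2 L.
Proof.
  intros E H. apply improper_int_intro.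
  - intros a b Ha Hab. apply (ex_RInt_ext h1).
    + intros t Ht. rewrite Rmin_left in Ht by exact Hab. apply E. lra.
    + destruct (proj1 H a b Ha Hab) as [pr]. apply ex_RInt_Reals_1, pr.
  - intros eps He. destruct (improper_int_approx h1 L H eps He) as [d [M [Hd [HM Ha]]]].
    exists d, M. split; [exact Hd|]. split; [exact HM|]. intros a b H0 Had Hb Hab.
    rewrite <- (RInt_ext h1); [apply Ha; assumption|].
    intros t Ht. rewrite Rmin_left in Ht by exact Hab. apply E. lra.
Qed.

Lemma improper_int_unique h L1 L2 : improper_int h L1 -> improper_int h L2 -> L1 = L2.
Proof.
  intros H1 H2. apply Rminus_diag_uniq_sym, Rabs_eq_0.
  apply Rle_antisym; [|apply Rabs_pos]. apply Rnot_lt_le. intros Hlt.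
  set (e := Rabs (L2 - L1) / 2).
  destruct (improper_int_approx h L1 H1 e ltac:(unfold e; lra)) as [d1 [M1 [Hd1 [HM1 A1]]]].
  destruct (improper_int_approx h L2 H2 e ltac:(unfold e; lra)) as [d2 [M2 [Hd2 [HM2 A2]]]].
  set (a := Rmin d1 d2 / 2). set (b := Rmax (Rmax M1 M2) a + 1).
  assert (0 < a) by (unfold a; apply Rmin_case; lra).
  assert (a < d1) by (unfold a; pose proof (Rmin_l d1 d2); lra).
  assert (a < d2) by (unfold a; pose proof (Rmin_r d1 d2); lra).
  assert (M1 < b /\ M2 < b /\ a <= b) as [Hb1 [Hb2 Hab]].
  { unfold b. pose proof (Rmax_l (Rmax M1 M2) a). pose proof (Rmax_r (Rmax M1 M2) a).
    pose proof (Rmax_l M1 M2). pose proof (Rmax_r M1 M2). lra. }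
  specialize (A1 a b ltac:(assumption) ltac:(assumption) Hb1 Hab).
  specialize (A2 a b ltac:(assumption) ltac:(assumption) Hb2 Hab).
  pose proof (Rabs_triang (L2 - RInt h a b) (RInt h a b - L1)) as T.
  replace (L2 - RInt h a b + (RInt h a b - L1)) with (L2 - L1) in T by ring.
  rewrite Rabs_minus_sym in A2. unfold e in *. lra.
Qed.

Lemma improper_limit_cauchy (J : R -> R -> R) :
  (forall eps, 0 < eps -> exists d M, 0 < d /\ 0 < M /\ forall a b a' b',
      0 < a -> a < d -> 0 < a' -> a' < d -> M < b -> M < b' -> Rabs (J a b - J a' b') < eps) ->
  exists L, forall eps, 0 < eps -> exists d M, 0 < d /\ 0 < M /\
      forall a b, 0 < a -> a < d -> M < b -> Rabs (J a b - L) < eps.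
Proof.
  intros HC.
  set (u n := J (/ (INR n + 1)) (INR n + 1)).
  assert (Hreg : forall d M, 0 < d -> exists N, forall n, (N <= n)%nat ->
            0 < / (INR n + 1) /\ / (INR n + 1) < d /\ M < INR n + 1).
  { intros d M Hd. destruct (INR_unbounded (Rmax M (/ d))) as [N HN]. exists N.
    intros n Hn. apply le_INR in Hn. pose proof (pos_INR n).
    pose proof (Rmax_l M (/ d)). pose proof (Rmax_r M (/ d)).
    split; [apply Rinv_0_lt_compat; lra|split; [|lra]].
    rewrite <- (Rinv_inv d). apply Rinv_lt_contravar; [|lra].
    apply Rmult_lt_0_compat; [apply Rinv_0_lt_compat; exact Hd|lra]. }
  assert (Hc : Cauchy_crit u).
  { intros eps He. destruct (HC eps He) as [d [M [Hd [HM H]]]].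
    destruct (Hreg d M Hd) as [N HN]. exists N. intros n m Hn Hm.
    unfold R_dist, u. destruct (HN n Hn) as [? [? ?]]. destruct (HN m Hm) as [? [? ?]].
    apply H; assumption. }
  destruct (Rcomplete.R_complete _ Hc) as [L HL]. exists L.
  intros eps He. destruct (HC (eps / 2) ltac:(lra)) as [d [M [Hd [HM H]]]].
  exists d, M. split; [exact Hd|]. split; [exact HM|]. intros a b Ha Had Hb.
  destruct (HL (eps / 2) ltac:(lra)) as [N1 HN1]. destruct (Hreg d M Hd) as [N2 HN2].
  set (n := Nat.max N1 N2). specialize (HN1 n ltac:(unfold n; lia)).
  destruct (HN2 n ltac:(unfold n; lia)) as [? [? ?]].
  specialize (H a b _ _ Ha Had H0 H1 Hb H2). unfold R_dist, u in *.
  pose proof (Rabs_triang (J a b - J (/ (INR n + 1)) (INR n + 1)) (J (/ (INR n + 1)) (INR n + 1) - L)) as T.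
  replace (J a b - J (/ (INR n + 1)) (INR n + 1) + (J (/ (INR n + 1)) (INR n + 1) - L))
    with (J a b - L) in T by ring.
  lra.
Qed.

Lemma nonneg_of_Rabs_le_mult x B p : Rabs x <= B * p -> 0 < p -> 0 <= B.
Proof. intros H Hp. pose proof (Rabs_pos x). destruct (Rle_dec 0 B); [assumption|nra]. Qed.

Lemma ex_RInt_cont (f : R -> R) a b :
  (forall z, Rmin a b <= z <= Rmax a b -> continuous f z) -> ex_RInt f a b.
Proof. intros H. apply (ex_RInt_continuous (V := R_CompleteNormedModule)). exact H. Qed.

Lemma continuous_of_is_derive (f : R -> R) x l : is_derive f x l -> continuous f x.
Proof. intros H. apply (ex_derive_continuous (K := R_AbsRing) (V := R_NormedModule)). exists l. exact H. Qed.

Lemma continuous_dilate (F : R -> R) c y : continuous F (c * y) -> continuous (fun t => F (c * t)) y.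
Proof.
  intros Hc. apply (continuous_comp (fun t => c * t) F); [|exact Hc].
  apply (continuous_of_is_derive _ _ (c * 1)).
  apply (is_derive_scal (fun t => t) y c 1), (is_derive_id (K := R_AbsRing)).
Qed.

Lemma continuous_bounded F a b : a <= b -> (forall z, a <= z <= b -> continuous F z) ->
  exists M, 0 <= M /\ forall z, a <= z <= b -> Rabs (F z) <= M.
Proof.
  intros Hab Hc.
  destruct (continuity_ab_maj F a b Hab) as [x1 [H1 _]].
  { intros c Hc'. apply continuity_pt_filterlim, Hc, Hc'. }
  destruct (continuity_ab_maj (fun z => - F z) a b Hab) as [x2 [H2 _]].
  { intros c Hc'. apply continuity_pt_opp, continuity_pt_filterlim, Hc, Hc'. }
  exists (Rmax 0 (Rmax (F x1) (- F x2))). split; [apply Rmax_l|].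
  intros z Hz. specialize (H1 z Hz). specialize (H2 z Hz).
  pose proof (Rmax_l 0 (Rmax (F x1) (- F x2))). pose proof (Rmax_r 0 (Rmax (F x1) (- F x2))).
  pose proof (Rmax_l (F x1) (- F x2)). pose proof (Rmax_r (F x1) (- F x2)).
  apply Rabs_le. lra.
Qed.

Lemma decay_bound_from F al C X x0 : 0 <= al -> 0 < x0 ->
  (forall z, x0 <= z -> continuous F z) ->
  (forall t, X <= t -> Rabs (F t) <= C * Rpower t (- al)) ->
  exists B, 0 <= B /\ forall t, x0 <= t -> Rabs (F t) <= B * Rpower t (- al).
Proof.
  intros Hal Hx0 Hc Hd. set (Xm := Rmax x0 X).
  destruct (continuous_bounded F x0 Xm) as [M [HM HMb]].
  { apply Rmax_l. } { intros z Hz; apply Hc; lra. }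
  exists (Rmax C 0 + M * Rpower Xm al). split.
  { pose proof (Rmax_r C 0). pose proof (Rpower_pos Xm al). nra. }
  intros t Ht. pose proof (Rpower_pos t (- al)). pose proof (Rmax_l C 0). pose proof (Rmax_r C 0).
  pose proof (Rpower_pos Xm al).
  destruct (Rle_dec t Xm).
  - specialize (HMb t ltac:(lra)).
    assert (E : Rpower t al * Rpower t (- al) = 1).
    { rewrite <- Rpower_plus, Rplus_opp_r. apply Rpower_O. lra. }
    assert (Rpower t al <= Rpower Xm al) by (apply Rle_Rpower_l; lra).
    assert (M * (Rpower t al * Rpower t (- al)) <= M * (Rpower Xm al * Rpower t (- al))).
    { apply Rmult_le_compat_l; [exact HM|]. apply Rmult_le_compat_r; lra. }
    rewrite E, Rmult_1_r in H4. nra.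
  - assert (X <= t) by (pose proof (Rmax_r x0 X); unfold Xm in *; lra).
    specialize (Hd t H3).
    assert (0 <= M * Rpower Xm al * Rpower t (- al)) by (apply Rmult_le_pos; [apply Rmult_le_pos|]; lra).
    assert (C * Rpower t (- al) <= Rmax C 0 * Rpower t (- al)) by (apply Rmult_le_compat_r; lra).
    rewrite Rmult_plus_distr_r. lra.
Qed.

Lemma RInt_decay_le al F B t b : 1 < al -> 0 < t <= b ->
  (forall z, t <= z <= b -> continuous F z) ->
  (forall z, t <= z <= b -> Rabs (F z) <= B * Rpower z (- al)) ->
  Rabs (RInt F t b) <= B * Rpower t (1 - al) / (al - 1).
Proof.
  intros Hal Htb Hc Hb.
  assert (HB : 0 <= B) by (apply (nonneg_of_Rabs_le_mult (F t) B (Rpower t (- al))); [apply Hb; lra|apply Rpower_pos]).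
  assert (Hex : ex_RInt F t b) by (apply ex_RInt_cont; rewrite Rmin_left, Rmax_right by lra; exact Hc).
  assert (HI : is_RInt (fun u => B * Rpower u (- al)) t b
                 (B * ((Rpower t (1 - al) - Rpower b (1 - al)) / (al - 1))))
    by exact (is_RInt_scal _ _ _ B _ (is_RInt_Rpower al t b Hal Htb)).
  eapply Rle_trans; [apply abs_RInt_le; [lra|exact Hex]|].
  eapply Rle_trans.
  { apply (RInt_le (fun u => Rabs (F u)) (fun u => B * Rpower u (- al))); [lra| | eexists; exact HI|].
    - apply ex_RInt_cont. intros z Hz. rewrite Rmin_left, Rmax_right in Hz by lra.
      apply (continuous_comp F Rabs); [apply Hc; lra|apply continuous_Rabs].
    - intros z Hz. apply Hb. lra. }
  rewrite (is_RInt_unique _ _ _ _ HI).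
  pose proof (Rpower_pos b (1 - al)). unfold Rdiv. rewrite <- Rmult_assoc.
  apply Rmult_le_compat_r; [apply Rlt_le, Rinv_0_lt_compat; lra|].
  apply Rmult_le_compat_l; [exact HB|]. lra.
Qed.

Lemma RInt_const_minus (G : R -> R) K c d : ex_RInt G c d ->
  RInt (fun u => K - G u) c d = (d - c) * K - RInt G c d.
Proof.
  intros H.
  rewrite (RInt_minus (V := R_CompleteNormedModule) (fun _ => K) G);
    [|apply (ex_RInt_const (V := R_NormedModule))|exact H].
  rewrite (RInt_const (V := R_CompleteNormedModule)). reflexivity.
Qed.

Lemma RInt_dilate (G : R -> R) c a b : 0 < c -> ex_RInt G (c * a) (c * b) ->
  RInt (fun y => G (c * y)) a b = RInt G (c * a) (c * b) / c.
Proof.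
  intros Hc Hex.
  assert (Hex' : ex_RInt G (c * a + 0) (c * b + 0)) by (rewrite !Rplus_0_r; exact Hex).
  pose proof (RInt_comp_lin (V := R_CompleteNormedModule) G c 0 a b Hex') as E.
  pose proof (ex_RInt_comp_lin (V := R_CompleteNormedModule) G c 0 a b Hex') as Hex2.
  assert (E' : RInt (fun y => G (c * y)) a b = RInt (fun y => scal (/ c) (scal c (G (c * y + 0)))) a b).
  { apply RInt_ext. intros x _. rewrite Rplus_0_r.
    replace (G (c * x)) with (/ c * (c * G (c * x))) at 1 by (field; lra). reflexivity. }
  rewrite E'. refine (eq_trans (RInt_scal (V := R_CompleteNormedModule) _ a b (/ c) Hex2) _).
  refine (eq_trans (f_equal (scal (/ c)) E) _).
  rewrite !Rplus_0_r. change (/ c * RInt G (c * a) (c * b) = RInt G (c * a) (c * b) / c).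
  unfold Rdiv. ring.
Qed.

Lemma ex_RInt_sumN (G : nat -> R -> R) a b N : (forall n, ex_RInt (G n) a b) ->
  ex_RInt (fun y => sumN (fun n => G n y) N) a b.
Proof.
  intros H. induction N as [|N IH].
  - change (ex_RInt (fun _ : R => 0) a b). apply (ex_RInt_const (V := R_NormedModule)).
  - change (ex_RInt (fun y => plus (sumN (fun n => G n y) N) (G N y)) a b).
    apply (ex_RInt_plus (V := R_NormedModule) (fun y => sumN (fun n => G n y) N) (G N)); [exact IH|apply H].
Qed.

Lemma RInt_sumN (G : nat -> R -> R) a b N : (forall n, ex_RInt (G n) a b) ->
  RInt (fun y => sumN (fun n => G n y) N) a b = sumN (fun n => RInt (G n) a b) N.
Proof.
  intros H. induction N as [|N IH].
  - change (RInt (fun _ : R => 0) a b = 0). rewrite (RInt_const (V := R_CompleteNormedModule)).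
    change ((b - a) * 0 = 0). ring.
  - rewrite sumN_S, <- IH.
    exact (RInt_plus (V := R_CompleteNormedModule) (fun y => sumN (fun n => G n y) N) (G N) a b
      (ex_RInt_sumN G a b N H) (H N)).
Qed.

Lemma dilate_term_le al B (F : R -> R) a y n : 0 <= al -> 0 < a <= y ->
  (forall t, a <= t -> Rabs (F t) <= B * Rpower t (- al)) ->
  Rabs (F (INR (n + 1) * y)) <= B * Rpower a (- al) * pterm al n.
Proof.
  intros Hal Hay HB. pose proof (pos_INR n).
  assert (HB0 : 0 <= B) by (apply (nonneg_of_Rabs_le_mult (F a) B (Rpower a (- al))); [apply HB; lra|apply Rpower_pos]).
  eapply Rle_trans; [apply HB; rewrite INR_add1; nra|].
  rewrite INR_add1, <- Rpower_mult_distr by lra. unfold pterm.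
  assert (Rpower y (- al) <= Rpower a (- al)) by (apply Rpower_le_base_nonpos; lra).
  pose proof (Rpower_pos (INR n + 1) (- al)).
  replace (B * Rpower a (- al) * Rpower (INR n + 1) (- al))
    with ((B * Rpower (INR n + 1) (- al)) * Rpower a (- al)) by ring.
  rewrite <- Rmult_assoc. apply Rmult_le_compat_l; [apply Rmult_le_pos|]; lra.
Qed.

(** * The primitive and the average of F *)

Definition prim (F : R -> R) (t : R) : R := RInt F 0 t.

Definition avg (F : R -> R) (t : R) : R := prim F t / t.

Section Average.

Variables (al M0 M1 Bf : R) (F : R -> R).
Hypothesis al_gt1 : 1 < al.
Hypothesis F_cont : forall y, continuous F y.
Hypothesis F_bound : forall t, 0 <= t <= 1 -> Rabs (F t) <= M0.
Hypothesis F_lip : forall s t, 0 <= s <= 1 -> 0 <= t <= 1 -> Rabs (F t - F s) <= M1 * Rabs (t - s).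
Hypothesis F_decay : forall t, 1 <= t -> Rabs (F t) <= Bf * Rpower t (- al).
Hypothesis prim_vanish : forall eps, 0 < eps -> exists M, forall b, M < b -> Rabs (prim F b) < eps.

Let Cprim := M0 + Bf / (al - 1).
(* (1 + t)^2 <= 4 on [0, 1] and (1 + t)^2 <= 4 t^2 on [1, oo). *)
Let Kavg := 4 * (M1 + Bf + Bf / (al - 1)).

Lemma F_consts_nonneg : 0 <= M0 /\ 0 <= M1 /\ 0 <= Bf /\ 0 <= Bf / (al - 1).
Proof.
  assert (HM0 : 0 <= M0) by (specialize (F_bound 0 ltac:(lra)); pose proof (Rabs_pos (F 0)); lra).
  assert (HM1 : 0 <= M1).
  { apply (nonneg_of_Rabs_le_mult (F 1 - F 0) M1 (Rabs (1 - 0))); [apply F_lip; lra|].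
    rewrite Rminus_0_r, Rabs_R1; lra. }
  assert (HBf : 0 <= Bf).
  { apply (nonneg_of_Rabs_le_mult (F 1) Bf (Rpower 1 (- al))); [apply F_decay; lra|apply Rpower_pos]. }
  repeat split; try assumption. apply Rmult_le_pos; [exact HBf|apply Rlt_le, Rinv_0_lt_compat; lra].
Qed.

Lemma ex_RInt_F a b : ex_RInt F a b.
Proof. apply ex_RInt_cont. intros; apply F_cont. Qed.

Lemma is_derive_prim t : is_derive (prim F) t (F t).
Proof.
  apply (is_derive_RInt (V := R_CompleteNormedModule) F (RInt F 0) 0 t); [|apply F_cont].
  apply filter_forall. intros b. apply (RInt_correct (V := R_CompleteNormedModule)), ex_RInt_F.
Qed.

Lemma prim_sub a b : prim F b - prim F a = RInt F a b.
Proof.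
  unfold prim. rewrite <- (RInt_Chasles F 0 a b) by apply ex_RInt_F.
  change (RInt F 0 a + RInt F a b - RInt F 0 a = RInt F a b). ring.
Qed.

Lemma prim_le_small t : 0 <= t <= 1 -> Rabs (prim F t) <= M0 * t.
Proof.
  intros Ht. unfold prim. rewrite Rmult_comm. replace t with (t - 0) at 2 by ring.
  apply abs_RInt_le_const; [lra|apply ex_RInt_F|]. intros; apply F_bound; lra.
Qed.

Lemma prim_le_large t : 1 <= t -> Rabs (prim F t) <= Bf / (al - 1) * Rpower t (1 - al).
Proof.
  intros Ht. apply Rle_plus_epsilon. intros eps He.
  destruct (prim_vanish eps He) as [M HM]. set (b := Rmax M t + 1).
  assert (M < b /\ t <= b) as [H1 H2] by (unfold b; pose proof (Rmax_l M t); pose proof (Rmax_r M t); lra).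
  specialize (HM b H1). pose proof (prim_sub t b) as E.
  pose proof (RInt_decay_le al F Bf t b al_gt1 ltac:(lra) ltac:(intros; apply F_cont)
                ltac:(intros; apply F_decay; lra)) as Hint.
  pose proof (Rabs_triang (prim F b) (- RInt F t b)) as T. rewrite Rabs_Ropp in T.
  replace (prim F b + - RInt F t b) with (prim F t) in T by lra.
  replace (Bf / (al - 1) * Rpower t (1 - al)) with (Bf * Rpower t (1 - al) / (al - 1)) by (field; lra).
  lra.
Qed.

Lemma prim_le t : 0 < t -> Rabs (prim F t) <= Cprim * Rpower t (1 - al).
Proof.
  intros Ht. destruct F_consts_nonneg as [HM0 [_ [_ HBp]]]. unfold Cprim.
  pose proof (Rpower_pos t (1 - al)).
  destruct (Rle_dec t 1).
  - pose proof (prim_le_small t ltac:(lra)).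
    assert (t <= Rpower t (1 - al)).
    { rewrite Rpower_1_minus by exact Ht.
      assert (1 <= Rpower t (- al)).
      { rewrite Rpower_Ropp, <- Rinv_1. apply Rinv_le_contravar; [apply Rpower_pos|].
        rewrite <- (Rpower_1_l al). apply Rle_Rpower_l; lra. }
      nra. }
    nra.
  - pose proof (prim_le_large t ltac:(lra)). nra.
Qed.

Lemma is_derive_avg t : 0 < t -> is_derive (avg F) t ((t * F t - prim F t) / t ^ 2).
Proof.
  intros Ht. unfold avg.
  replace ((t * F t - prim F t) / t ^ 2) with ((F t * t - prim F t * 1) / t ^ 2) by (field; lra).
  apply (is_derive_div (prim F) (fun x => x) t (F t) 1);
    [apply is_derive_prim|apply (is_derive_id (K := R_AbsRing))|lra].
Qed.

Lemma continuous_avg t : 0 < t -> continuous (avg F) t.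
Proof. intros Ht. eapply continuous_of_is_derive. apply is_derive_avg, Ht. Qed.

Lemma ex_RInt_avg u v : 0 < u -> 0 < v -> ex_RInt (avg F) u v.
Proof.
  intros Hu Hv. apply ex_RInt_cont. intros z Hz. apply continuous_avg.
  apply Rlt_le_trans with (Rmin u v); [apply Rmin_case|]; lra.
Qed.

Lemma avg_numer_le_small t : 0 <= t <= 1 -> Rabs (t * F t - prim F t) <= M1 * t ^ 2.
Proof.
  intros Ht. destruct F_consts_nonneg as [_ [HM1 _]].
  replace (t * F t - prim F t) with (RInt (fun u => F t - F u) 0 t)
    by (unfold prim; rewrite RInt_const_minus, Rminus_0_r by apply ex_RInt_F; reflexivity).
  replace (M1 * t ^ 2) with ((t - 0) * (M1 * t)) by ring.
  apply abs_RInt_le_const; [lra| |].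
  - apply ex_RInt_cont. intros z _.
    apply (continuous_minus (V := R_NormedModule)); [apply continuous_const|apply F_cont].
  - intros u Hu. eapply Rle_trans; [apply F_lip; lra|].
    apply Rmult_le_compat_l; [exact HM1|]. rewrite Rabs_right by lra. lra.
Qed.

Lemma avg_numer_le_large t : 1 <= t -> Rabs (t * F t - prim F t) <= Bf + Bf / (al - 1).
Proof.
  intros Ht. destruct F_consts_nonneg as [_ [_ [HBf HBp]]].
  unfold Rminus at 1. eapply Rle_trans; [apply Rabs_triang|].
  rewrite Rabs_Ropp, Rabs_mult, (Rabs_right t) by lra.
  pose proof (F_decay t Ht). pose proof (prim_le_large t Ht).
  assert (Rpower t (1 - al) <= 1) by (apply Rpower_le_1; lra).
  assert (t * Rabs (F t) <= Bf * Rpower t (1 - al)).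
  { rewrite Rpower_1_minus by lra.
    replace (Bf * (t * Rpower t (- al))) with (t * (Bf * Rpower t (- al))) by ring.
    apply Rmult_le_compat_l; lra. }
  pose proof (Rpower_pos t (1 - al)). nra.
Qed.

Lemma avg_deriv_le t : 0 < t -> Rabs ((t * F t - prim F t) / t ^ 2) <= Kavg / (1 + t) ^ 2.
Proof.
  intros Ht. destruct F_consts_nonneg as [_ [HM1 [HBf HBp]]]. unfold Kavg.
  assert (Ht2 : 0 < t ^ 2) by (simpl; nra).
  assert (H1t : 0 < (1 + t) ^ 2) by (simpl; nra).
  unfold Rdiv at 1. rewrite Rabs_mult, (Rabs_right (/ t ^ 2)) by (apply Rle_ge, Rlt_le, Rinv_0_lt_compat; lra).
  apply Rmult_le_reg_r with ((1 + t) ^ 2); [exact H1t|].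
  unfold Rdiv. rewrite (Rmult_assoc (4 * _)), Rinv_l, Rmult_1_r by lra.
  destruct (Rle_dec t 1) as [Ht1|Ht1].
  - pose proof (avg_numer_le_small t ltac:(lra)) as B.
    assert (Rabs (t * F t - prim F t) * / t ^ 2 <= M1).
    { apply Rmult_le_reg_r with (t ^ 2); [exact Ht2|].
      rewrite Rmult_assoc, Rinv_l by lra. lra. }
    assert ((1 + t) ^ 2 <= 4) by (simpl; nra).
    pose proof (Rabs_pos (t * F t - prim F t)). pose proof (Rinv_0_lt_compat _ Ht2). nra.
  - pose proof (avg_numer_le_large t ltac:(lra)) as B.
    assert (Hq : (1 + t) ^ 2 * / t ^ 2 <= 4).
    { apply Rmult_le_reg_r with (t ^ 2); [exact Ht2|].
      rewrite Rmult_assoc, Rinv_l by lra. simpl. nra. }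
    pose proof (Rinv_0_lt_compat _ Ht2).
    rewrite Rmult_assoc. apply Rle_trans with ((Bf + Bf / (al - 1)) * 4); [|lra].
    apply Rmult_le_compat; [apply Rabs_pos|apply Rmult_le_pos; lra|exact B|lra].
Qed.

Lemma avg_lipschitz s t : 0 < s <= t -> Rabs (avg F t - avg F s) <= Kavg / (1 + s) ^ 2 * (t - s).
Proof.
  intros Hst. destruct F_consts_nonneg as [_ [HM1 [HBf HBp]]].
  destruct (MVT_gen (avg F) s t (fun u => (u * F u - prim F u) / u ^ 2)) as [c [Hc Heq]].
  - intros x Hx. rewrite Rmin_left, Rmax_right in Hx by lra. apply is_derive_avg. lra.
  - intros x Hx. rewrite Rmin_left, Rmax_right in Hx by lra.
    apply continuity_pt_filterlim, continuous_avg. lra.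
  - rewrite Rmin_left, Rmax_right in Hc by lra. cbv beta in Heq. rewrite Heq.
    rewrite Rabs_mult, (Rabs_right (t - s)) by lra.
    apply Rmult_le_compat_r; [lra|].
    eapply Rle_trans; [apply avg_deriv_le; lra|].
    unfold Rdiv, Kavg. apply Rmult_le_compat_l; [lra|]. apply Rinv_le_contravar; simpl; nra.
Qed.

Lemma avg_le_small t : 0 < t <= 1 -> Rabs (avg F t) <= M0.
Proof.
  intros Ht. unfold avg, Rdiv. rewrite Rabs_mult, Rabs_inv, (Rabs_right t) by lra.
  pose proof (prim_le_small t ltac:(lra)).
  apply Rmult_le_reg_r with t; [lra|]. rewrite Rmult_assoc, Rinv_l by lra. lra.
Qed.

Lemma avg_le_large t : 1 <= t -> Rabs (avg F t) <= Bf / (al - 1) * Rpower t (- al).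
Proof.
  intros Ht. unfold avg, Rdiv at 1. rewrite Rabs_mult, Rabs_inv, (Rabs_right t) by lra.
  replace (Rpower t (- al)) with (Rpower t (1 - al) / t)
    by (rewrite <- Rpower_pred_expo by lra; f_equal; ring).
  unfold Rdiv. rewrite <- Rmult_assoc.
  apply Rmult_le_compat_r; [apply Rlt_le, Rinv_0_lt_compat; lra|apply prim_le_large, Ht].
Qed.

Lemma avg_step_le a c : 0 < a -> 0 < c ->
  Rabs (a * avg F c - RInt (avg F) c (c + a)) <= Kavg * a * (a / (1 + c) ^ 2).
Proof.
  intros Ha Hc. destruct F_consts_nonneg as [_ [HM1 [HBf HBp]]].
  assert (HK : 0 <= Kavg / (1 + c) ^ 2) by (unfold Kavg, Rdiv; apply Rmult_le_pos; [lra|]; apply Rlt_le, Rinv_0_lt_compat; simpl; nra).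
  replace (a * avg F c - RInt (avg F) c (c + a)) with (RInt (fun u => avg F c - avg F u) c (c + a))
    by (rewrite RInt_const_minus by (apply ex_RInt_avg; lra); replace (c + a - c) with a by ring; reflexivity).
  replace (Kavg * a * (a / (1 + c) ^ 2)) with ((c + a - c) * (Kavg / (1 + c) ^ 2 * a)) by (field; simpl; nra).
  apply abs_RInt_le_const; [lra| |].
  - apply ex_RInt_cont. intros z Hz. rewrite Rmin_left, Rmax_right in Hz by lra.
    apply (continuous_minus (V := R_NormedModule)); [apply continuous_const|apply continuous_avg; lra].
  - intros u Hu. rewrite Rabs_minus_sym. eapply Rle_trans; [apply avg_lipschitz; lra|].
    apply Rmult_le_compat_l; lra.
Qed.

(* The error bound telescopes because a / (x + a)^2 <= 1/x - 1/(x + a). *)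
Lemma riemann_sum_avg a N : 0 < a ->
  Rabs (sumN (fun n => a * avg F (INR (n + 1) * a)) N - RInt (avg F) a (INR (N + 1) * a))
  <= Kavg * a * (1 - / (1 + INR N * a)).
Proof.
  intros Ha. destruct F_consts_nonneg as [_ [HM1 [HBf HBp]]].
  assert (HK : 0 <= Kavg) by (unfold Kavg; lra).
  induction N as [|N IH].
  - simpl sumN. rewrite INR_add1. simpl INR. rewrite Rplus_0_l, Rmult_1_l, Rmult_0_l, Rplus_0_r, Rinv_1.
    rewrite (RInt_point (V := R_CompleteNormedModule)).
    change (Rabs (0 - 0) <= Kavg * a * (1 - 1)). rewrite Rminus_0_r, Rabs_R0. lra.
  - set (c := INR (N + 1) * a) in *.
    assert (Hc0 : 0 < c) by (unfold c; rewrite INR_add1; pose proof (pos_INR N); nra).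
    assert (E1 : INR (S N + 1) * a = c + a) by (unfold c; rewrite !INR_add1, S_INR; ring).
    rewrite E1, sumN_S. change (INR (N + 1) * a) with c.
    rewrite <- (RInt_Chasles (V := R_CompleteNormedModule) (avg F) a c (c + a)) by (apply ex_RInt_avg; lra).
    change (plus (RInt (avg F) a c) (RInt (avg F) c (c + a))) with (RInt (avg F) a c + RInt (avg F) c (c + a)).
    pose proof (avg_step_le a c Ha Hc0) as T.
    set (E := sumN (fun n => a * avg F (INR (n + 1) * a)) N - RInt (avg F) a c) in IH.
    replace (sumN (fun n => a * avg F (INR (n + 1) * a)) N + a * avg F c -
      (RInt (avg F) a c + RInt (avg F) c (c + a))) with (E + (a * avg F c - RInt (avg F) c (c + a)))
      by (unfold E; ring).
    eapply Rle_trans; [apply Rabs_triang|].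
    assert (Hx : 1 + c = (1 + INR N * a) + a) by (unfold c; rewrite INR_add1; ring).
    assert (Htel : a / (1 + c) ^ 2 <= / (1 + INR N * a) - / (1 + c)).
    { pose proof (pos_INR N). rewrite Hx.
      replace (/ (1 + INR N * a) - / (1 + INR N * a + a)) with
        (a / ((1 + INR N * a) * (1 + INR N * a + a))) by (field; nra).
      unfold Rdiv. apply Rmult_le_compat_l; [lra|]. apply Rinv_le_contravar; [nra|simpl; nra]. }
    rewrite S_INR. replace (1 + (INR N + 1) * a) with (1 + c) by (unfold c; rewrite INR_add1; ring).
    assert (Kavg * a * (a / (1 + c) ^ 2) <= Kavg * a * (/ (1 + INR N * a) - / (1 + c)))
      by (apply Rmult_le_compat_l; [nra|exact Htel]).
    rewrite Rmult_minus_distr_l in IH, H |- *. lra.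
Qed.

Lemma RInt_avg_le_near_0 a a' : 0 < a <= 1 -> 0 < a' <= 1 -> Rabs (RInt (avg F) a a') <= Rabs (a' - a) * M0.
Proof.
  intros Ha Ha'. apply (norm_RInt_le_const_abs (avg F));
    [|apply (RInt_correct (V := R_CompleteNormedModule)), ex_RInt_avg; lra].
  intros z Hz. apply avg_le_small. split.
  - apply Rlt_le_trans with (Rmin a a'); [apply Rmin_case; lra|lra].
  - apply Rle_trans with (Rmax a a'); [lra|apply Rmax_case; lra].
Qed.

Lemma RInt_avg_tail_lt eps : 0 < eps ->
  exists M, 1 <= M /\ forall b, M < b -> Rabs (RInt (avg F) M b) < eps.
Proof.
  intros He. destruct F_consts_nonneg as [_ [_ [_ HBp]]]. set (Bp := Bf / (al - 1)) in *.
  destruct (Rpower_eventually_lt (eps * (al - 1) / (Bp + 1)) (1 - al)) as [Y [HY HYy]].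
  { apply Rdiv_lt_0_compat; [apply Rmult_lt_0_compat|]; lra. } { lra. }
  exists (Rmax 1 Y). split; [apply Rmax_l|]. intros b Hb. pose proof (Rmax_l 1 Y).
  eapply Rle_lt_trans.
  - apply (RInt_decay_le al (avg F) Bp (Rmax 1 Y) b al_gt1 ltac:(lra)).
    + intros z Hz. apply continuous_avg. lra.
    + intros z Hz. apply avg_le_large. lra.
  - specialize (HYy (Rmax 1 Y) (Rmax_r 1 Y)). pose proof (Rpower_pos (Rmax 1 Y) (1 - al)).
    apply Rmult_lt_reg_r with (al - 1); [lra|].
    replace (Bp * Rpower (Rmax 1 Y) (1 - al) / (al - 1) * (al - 1)) with (Bp * Rpower (Rmax 1 Y) (1 - al))
      by (field; lra).
    apply Rle_lt_trans with ((Bp + 1) * Rpower (Rmax 1 Y) (1 - al)); [nra|].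
    replace (eps * (al - 1)) with ((Bp + 1) * (eps * (al - 1) / (Bp + 1))) by (field; lra).
    apply Rmult_lt_compat_l; lra.
Qed.

Lemma ex_improper_avg : exists L, improper_int (avg F) L.
Proof.
  destruct F_consts_nonneg as [HM0 _].
  destruct (improper_limit_cauchy (RInt (avg F))) as [L HL].
  - intros eps He. destruct (RInt_avg_tail_lt (eps / 4) ltac:(lra)) as [M [HM1 Htail]].
    set (d := Rmin 1 (eps / (4 * (M0 + 1)))).
    assert (Hd0 : 0 < d) by (unfold d; apply Rmin_case; [lra|apply Rdiv_lt_0_compat; lra]).
    assert (Hd1 : d <= 1) by apply Rmin_l.
    assert (Hd2 : d <= eps / (4 * (M0 + 1))) by apply Rmin_r.
    exists d, M. split; [exact Hd0|]. split; [lra|].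
    intros a b a' b' Ha Had Ha' Ha'd Hb Hb'.
    assert (E : RInt (avg F) a b - RInt (avg F) a' b' =
                RInt (avg F) a a' + (RInt (avg F) M b - RInt (avg F) M b')).
    { rewrite <- (RInt_Chasles (V := R_CompleteNormedModule) (avg F) a a' b) by (apply ex_RInt_avg; lra).
      rewrite <- (RInt_Chasles (V := R_CompleteNormedModule) (avg F) a' M b) by (apply ex_RInt_avg; lra).
      rewrite <- (RInt_Chasles (V := R_CompleteNormedModule) (avg F) a' M b') by (apply ex_RInt_avg; lra).
      repeat change (plus ?x ?y) with (x + y). ring. }
    rewrite E.
    assert (T1 : Rabs (RInt (avg F) a a') <= eps / 4).
    { eapply Rle_trans; [apply RInt_avg_le_near_0; lra|].
      apply Rle_trans with (eps / (4 * (M0 + 1)) * M0).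
      - apply Rmult_le_compat_r; [lra|]. apply Rabs_le. lra.
      - apply Rmult_le_reg_r with (4 * (M0 + 1)); [lra|].
        replace (eps / (4 * (M0 + 1)) * M0 * (4 * (M0 + 1))) with (eps * M0) by (field; lra). nra. }
    pose proof (Htail b Hb). pose proof (Htail b' Hb').
    pose proof (Rabs_triang (RInt (avg F) a a') (RInt (avg F) M b - RInt (avg F) M b')) as T2.
    pose proof (Rabs_triang (RInt (avg F) M b) (- RInt (avg F) M b')) as T3. rewrite Rabs_Ropp in T3.
    unfold Rminus at 2 in T2. lra.
  - exists L. apply improper_int_intro; [intros; apply ex_RInt_avg; lra|].
    intros eps He. destruct (HL eps He) as [d [M [Hd [HM H]]]]. exists d, M. auto.
Qed.

Section AverageIntegral.

Variable L : R.
Hypothesis avg_int : improper_int (avg F) L.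

Lemma prim_series_term_le c n : 0 < c ->
  Rabs (prim F (INR (n + 1) * c) / INR (n + 1)) <= Cprim * Rpower c (1 - al) * pterm al n.
Proof.
  intros Hc. assert (Hn : 0 < INR (n + 1)) by (rewrite INR_add1; pose proof (pos_INR n); lra).
  pose proof (prim_le (INR (n + 1) * c) ltac:(nra)) as H.
  rewrite <- Rpower_mult_distr in H by lra.
  unfold Rdiv. rewrite Rabs_mult, Rabs_inv, (Rabs_right (INR (n + 1))) by lra.
  replace (pterm al n) with (Rpower (INR (n + 1)) (1 - al) * / INR (n + 1))
    by (unfold pterm; rewrite <- INR_add1; replace (- al) with (1 - al - 1) by ring;
        rewrite Rpower_pred_expo by lra; reflexivity).
  apply Rle_trans with (Cprim * (Rpower (INR (n + 1)) (1 - al) * Rpower c (1 - al)) * / INR (n + 1)).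
  - apply Rmult_le_compat_r; [apply Rlt_le, Rinv_0_lt_compat; lra|exact H].
  - right. ring.
Qed.

Lemma ex_prim_series c : 0 < c ->
  exists A, infinite_sum (fun n => prim F (INR (n + 1) * c) / INR (n + 1)) A.
Proof. intros Hc. eapply ex_infinite_sum_pterm; [exact al_gt1|]. intros n. apply prim_series_term_le, Hc. Qed.

Lemma prim_series_le c A : 0 < c ->
  infinite_sum (fun n => prim F (INR (n + 1) * c) / INR (n + 1)) A ->
  Rabs A <= Cprim * Rpower c (1 - al) * zeta_bound al.
Proof.
  intros Hc Hs. apply (infinite_sum_pterm_le al _ A _ al_gt1 Hs). intros n. apply prim_series_term_le, Hc.
Qed.

(* sum_n prim(n a)/n = sum_n a avg(n a) is a Riemann sum for the integral of avg. *)
Lemma prim_series_lim eps : 0 < eps -> exists del, 0 < del /\ forall a A, 0 < a < del ->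
  infinite_sum (fun n => prim F (INR (n + 1) * a) / INR (n + 1)) A -> Rabs (A - L) < eps.
Proof.
  intros He. destruct F_consts_nonneg as [_ [HM1 [HBf HBp]]].
  assert (HK : 0 <= Kavg) by (unfold Kavg; lra).
  destruct (improper_int_approx _ _ avg_int (eps / 3) ltac:(lra)) as [d [M [Hd [HM HdM]]]].
  set (del := Rmin d (eps / (3 * (Kavg + 1)))).
  exists del. split; [unfold del; apply Rmin_case; [lra|apply Rdiv_lt_0_compat; lra]|].
  intros a A [Ha Hadel] Hs.
  assert (Had : a < d) by (pose proof (Rmin_l d (eps / (3 * (Kavg + 1)))); unfold del in *; lra).
  assert (Hae : a < eps / (3 * (Kavg + 1))) by (pose proof (Rmin_r d (eps / (3 * (Kavg + 1)))); unfold del in *; lra).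
  destruct (proj1 (infinite_sum_sumN _ _) Hs (eps / 3) ltac:(lra)) as [N1 HN1].
  destruct (INR_unbounded (M / a)) as [N2 HN2].
  set (N := Nat.max N1 N2). specialize (HN1 N ltac:(unfold N; lia)).
  assert (HNa : M < INR (N + 1) * a).
  { rewrite INR_add1. assert (INR N2 <= INR N) by (apply le_INR; unfold N; lia).
    apply Rmult_lt_reg_r with (/ a); [apply Rinv_0_lt_compat; lra|].
    rewrite Rmult_assoc, Rinv_r, Rmult_1_r by lra. unfold Rdiv in HN2. lra. }
  assert (Hab : a <= INR (N + 1) * a) by (rewrite INR_add1; pose proof (pos_INR N); nra).
  specialize (HdM a (INR (N + 1) * a) Ha Had HNa Hab).
  pose proof (riemann_sum_avg a N Ha) as RS.
  rewrite (sumN_ext _ (fun n => a * avg F (INR (n + 1) * a))) in HN1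
    by (intros i _; unfold avg; rewrite INR_add1; pose proof (pos_INR i); field; split; lra).
  assert (Kavg * a * (1 - / (1 + INR N * a)) <= Kavg * a).
  { assert (0 < / (1 + INR N * a)) by (apply Rinv_0_lt_compat; pose proof (pos_INR N); nra).
    assert (0 <= Kavg * a) by nra. nra. }
  assert (Kavg * a < eps / 3).
  { apply Rle_lt_trans with ((Kavg + 1) * a); [nra|].
    replace (eps / 3) with ((Kavg + 1) * (eps / (3 * (Kavg + 1)))) by (field; lra).
    apply Rmult_lt_compat_l; lra. }
  set (S := sumN (fun n => a * avg F (INR (n + 1) * a)) N) in *.
  set (I := RInt (avg F) a (INR (N + 1) * a)) in *.
  pose proof (Rabs_triang (A - S) (S - I)). pose proof (Rabs_triang (A - S + (S - I)) (I - L)).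
  replace (A - S + (S - I) + (I - L)) with (A - L) in H2 by ring.
  rewrite Rabs_minus_sym in HN1. lra.
Qed.

Section Dilation.

Variable g : R -> R.
Hypothesis g_cont : forall y, 0 < y -> continuous g y.
Hypothesis g_sum : forall y, 0 < y -> infinite_sum (fun n => F (INR (n + 1) * y)) (g y).

Lemma dilation_series_tail_le a : 0 < a -> exists K, 0 <= K /\ forall y N, a <= y -> (1 <= N)%nat ->
  Rabs (g y - sumN (fun n => F (INR (n + 1) * y)) N) <= K * (Rpower (INR N) (1 - al) / (al - 1)).
Proof.
  intros Ha.
  destruct (decay_bound_from F al Bf 1 a ltac:(lra) Ha (fun z _ => F_cont z) F_decay) as [B [HB HBd]].
  exists (B * Rpower a (- al)). split; [pose proof (Rpower_pos a (- al)); nra|].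
  intros y N Hy HN. apply (infinite_sum_tail_le _ _ (fun n => B * Rpower a (- al) * pterm al n)).
  - apply g_sum. lra.
  - intros n. apply (dilate_term_le al B F a y n); [lra|lra|intros; apply HBd; lra].
  - intros M. rewrite sumN_from_scal. apply Rmult_le_compat_l; [pose proof (Rpower_pos a (- al)); nra|].
    apply sumN_from_pterm_le; assumption.
Qed.

Lemma RInt_dilation_series a b : 0 < a <= b ->
  infinite_sum (fun n => (prim F (INR (n + 1) * b) - prim F (INR (n + 1) * a)) / INR (n + 1)) (RInt g a b).
Proof.
  intros Hab. destruct (dilation_series_tail_le a ltac:(lra)) as [K [HK Tail]].
  assert (Hex : forall n, ex_RInt (fun y => F (INR (n + 1) * y)) a b).
  { intros n. apply ex_RInt_cont. intros z _. apply continuous_dilate, F_cont. }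
  assert (Hexg : ex_RInt g a b).
  { apply ex_RInt_cont. intros z Hz. apply g_cont. rewrite Rmin_left in Hz by lra. lra. }
  assert (Hpart : forall N, sumN (fun n => (prim F (INR (n + 1) * b) - prim F (INR (n + 1) * a)) / INR (n + 1)) N
                  = RInt (fun y => sumN (fun n => F (INR (n + 1) * y)) N) a b).
  { intros N. rewrite (RInt_sumN (fun n y => F (INR (n + 1) * y))) by exact Hex.
    apply sumN_ext. intros n _. assert (Hn : 0 < INR (n + 1)) by (rewrite INR_add1; pose proof (pos_INR n); lra).
    rewrite (RInt_dilate F (INR (n + 1)) a b Hn) by apply ex_RInt_F.
    rewrite <- prim_sub. reflexivity. }
  apply infinite_sum_sumN. intros eps He.
  destruct (Rpower_eventually_lt (eps * (al - 1) / ((b - a) * K + 1)) (1 - al)) as [Y [HY HYy]].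
  { apply Rdiv_lt_0_compat; nra. } { lra. }
  destruct (INR_unbounded Y) as [N0 HN0].
  exists (S N0). intros n Hn. rewrite Hpart.
  assert (E : RInt (fun y => sumN (fun m => F (INR (m + 1) * y)) n) a b - RInt g a b =
              - RInt (fun y => g y - sumN (fun m => F (INR (m + 1) * y)) n) a b).
  { rewrite (RInt_minus (V := R_CompleteNormedModule) g); [|exact Hexg|apply ex_RInt_sumN, Hex].
    change (RInt (fun y => sumN (fun m => F (INR (m + 1) * y)) n) a b - RInt g a b =
            - (RInt g a b - RInt (fun y => sumN (fun m => F (INR (m + 1) * y)) n) a b)). ring. }
  rewrite E, Rabs_Ropp.
  assert (HnY : Y <= INR n) by (apply Rle_trans with (INR N0); [lra|apply le_INR; lia]).
  specialize (HYy (INR n) HnY). pose proof (Rpower_pos (INR n) (1 - al)).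
  set (P := Rpower (INR n) (1 - al)) in *.
  eapply Rle_lt_trans.
  - apply (abs_RInt_le_const _ a b (K * (P / (al - 1)))); [lra| |].
    + apply (ex_RInt_minus (V := R_NormedModule)); [exact Hexg|apply ex_RInt_sumN, Hex].
    + intros t Ht. apply Tail; [lra|lia].
  - replace ((b - a) * (K * (P / (al - 1)))) with ((b - a) * K * P / (al - 1)) by (field; lra).
    apply Rmult_lt_reg_r with (al - 1); [lra|].
    replace ((b - a) * K * P / (al - 1) * (al - 1)) with ((b - a) * K * P) by (field; lra).
    apply Rle_lt_trans with (((b - a) * K + 1) * P); [nra|].
    replace (eps * (al - 1)) with (((b - a) * K + 1) * (eps * (al - 1) / ((b - a) * K + 1))) by (field; nra).
    apply Rmult_lt_compat_l; nra.
Qed.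

Lemma improper_int_dilation_series : improper_int g (- L).
Proof.
  destruct F_consts_nonneg as [HM0 [_ [_ HBp]]].
  apply improper_int_intro.
  - intros a b Ha Hab. apply ex_RInt_cont. intros z Hz. apply g_cont. rewrite Rmin_left in Hz by lra. lra.
  - intros eps He.
    destruct (prim_series_lim (eps / 2) ltac:(lra)) as [del [Hdel HA]].
    set (G := Cprim * zeta_bound al).
    assert (HG : 0 <= G) by (pose proof (zeta_bound_pos al al_gt1); unfold G, Cprim; nra).
    destruct (Rpower_eventually_lt (eps / 2 / (G + 1)) (1 - al)) as [Y [HY HYy]].
    { apply Rdiv_lt_0_compat; lra. } { lra. }
    exists del, (Rmax Y 1). split; [exact Hdel|]. split; [pose proof (Rmax_r Y 1); lra|].
    intros a b Ha Had Hb Hab. pose proof (Rmax_l Y 1). pose proof (Rmax_r Y 1).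
    destruct (ex_prim_series a Ha) as [Aa HAa].
    destruct (ex_prim_series b ltac:(lra)) as [Ab HAb].
    assert (Hd : infinite_sum (fun n => (prim F (INR (n + 1) * b) - prim F (INR (n + 1) * a)) / INR (n + 1)) (Ab - Aa)).
    { eapply infinite_sum_ext; [|exact (infinite_sum_minus _ _ _ _ HAb HAa)].
      intros n. cbv beta. unfold Rdiv. ring. }
    rewrite (uniqueness_sum _ _ _ (RInt_dilation_series a b ltac:(lra)) Hd).
    specialize (HA a Aa ltac:(lra) HAa).
    assert (Rabs Ab < eps / 2).
    { eapply Rle_lt_trans; [exact (prim_series_le b Ab ltac:(lra) HAb)|].
      specialize (HYy b ltac:(lra)). pose proof (Rpower_pos b (1 - al)).
      replace (Cprim * Rpower b (1 - al) * zeta_bound al) with (G * Rpower b (1 - al)) by (unfold G; ring).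
      apply Rle_lt_trans with ((G + 1) * Rpower b (1 - al)); [nra|].
      replace (eps / 2) with ((G + 1) * (eps / 2 / (G + 1))) by (field; lra).
      apply Rmult_lt_compat_l; lra. }
    replace (Ab - Aa - - L) with (Ab - (Aa - L)) by ring.
    pose proof (Rabs_triang Ab (- (Aa - L))) as T. rewrite Rabs_Ropp in T. unfold Rminus at 1. lra.
Qed.

End Dilation.

Definition log_antider (x gam t : R) : R := / x * prim F (x * t) * (ln t + 2 * gam).

Lemma is_derive_log_antider x gam t : 0 < x -> 0 < t ->
  is_derive (log_antider x gam) t (F (x * t) * (ln t + 2 * gam) + avg F (x * t)).
Proof.
  intros Hx Ht. unfold log_antider. auto_derive.
  - split; [|split; [lra|exact I]]. exists (F (x * t)). apply is_derive_prim.
  - replace (Derive (fun y => prim F y) (x * t)) with (F (x * t))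
      by (symmetry; apply is_derive_unique, is_derive_prim).
    unfold avg. field. split; lra.
Qed.

Lemma continuous_log_weight x gam t : 0 < t -> continuous (fun t => F (x * t) * (ln t + 2 * gam)) t.
Proof.
  intros Ht. apply (continuous_mult (K := R_AbsRing)); [apply continuous_dilate, F_cont|].
  apply (continuous_plus (V := R_NormedModule)); [|apply continuous_const].
  apply (continuous_of_is_derive _ _ (/ t)), is_derive_ln, Ht.
Qed.

Lemma RInt_log_weight x gam a b : 0 < x -> 0 < a <= b ->
  RInt (fun t => F (x * t) * (ln t + 2 * gam)) a b =
  log_antider x gam b - log_antider x gam a - RInt (avg F) (x * a) (x * b) / x.
Proof.
  intros Hx Hab.
  assert (Hex1 : ex_RInt (fun t => F (x * t) * (ln t + 2 * gam)) a b).
  { apply ex_RInt_cont. intros z Hz. rewrite Rmin_left in Hz by lra. apply continuous_log_weight. lra. }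
  assert (Hex2 : ex_RInt (fun t => avg F (x * t)) a b).
  { apply ex_RInt_cont. intros z Hz. rewrite Rmin_left in Hz by lra.
    apply continuous_dilate, continuous_avg. nra. }
  assert (E1 : RInt (fun t => F (x * t) * (ln t + 2 * gam) + avg F (x * t)) a b
               = log_antider x gam b - log_antider x gam a).
  { apply (is_RInt_unique (V := R_CompleteNormedModule)).
    apply (is_RInt_derive (V := R_CompleteNormedModule) (log_antider x gam)).
    - intros t Ht. rewrite Rmin_left, Rmax_right in Ht by lra. apply is_derive_log_antider; lra.
    - intros t Ht. rewrite Rmin_left, Rmax_right in Ht by lra.
      apply (continuous_plus (V := R_NormedModule)); [apply continuous_log_weight; lra|].
      apply continuous_dilate, continuous_avg. nra. }
  assert (E2 : RInt (fun t => F (x * t) * (ln t + 2 * gam) + avg F (x * t)) a b =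
     RInt (fun t => F (x * t) * (ln t + 2 * gam)) a b + RInt (fun t => avg F (x * t)) a b)
    by exact (RInt_plus (V := R_CompleteNormedModule) _ _ a b Hex1 Hex2).
  rewrite (RInt_dilate (avg F) x a b Hx) in E2 by (apply ex_RInt_avg; nra).
  lra.
Qed.

Lemma log_antider_near_0 x gam eps : 0 < x -> 0 < eps ->
  exists d, 0 < d /\ forall a, 0 < a < d -> Rabs (log_antider x gam a) < eps.
Proof.
  intros Hx He. destruct F_consts_nonneg as [HM0 _].
  destruct (mul_ln_near_0_lt (2 * Rabs gam) (eps / (M0 + 1))) as [d [Hd [_ Hsmall]]].
  { pose proof (Rabs_pos gam); lra. } { apply Rdiv_lt_0_compat; lra. }
  exists (Rmin d (1 / x)). split; [apply Rmin_case; [lra|apply Rdiv_lt_0_compat; lra]|].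
  intros a [Ha Had]. pose proof (Rmin_l d (1 / x)). pose proof (Rmin_r d (1 / x)).
  assert (Hxa : x * a <= 1).
  { apply Rmult_le_reg_l with (/ x); [apply Rinv_0_lt_compat; lra|].
    rewrite <- Rmult_assoc, Rinv_l, Rmult_1_l, Rmult_1_r by lra. unfold Rdiv in *. lra. }
  specialize (Hsmall a ltac:(lra)).
  assert (Hw : Rabs (ln a + 2 * gam) <= Rabs (ln a) + 2 * Rabs gam).
  { eapply Rle_trans; [apply Rabs_triang|]. rewrite Rabs_mult, (Rabs_right 2) by lra. lra. }
  pose proof (prim_le_small (x * a) ltac:(split; nra)) as Hp.
  unfold log_antider. rewrite !Rabs_mult, Rabs_inv, (Rabs_right x) by lra.
  assert (E : / x * (M0 * (x * a)) = M0 * a) by (field; lra).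
  apply Rle_lt_trans with (M0 * (a * (Rabs (ln a) + 2 * Rabs gam))).
  - rewrite <- Rmult_assoc, <- E. apply Rmult_le_compat; [| apply Rabs_pos | |exact Hw].
    + apply Rmult_le_pos; [apply Rlt_le, Rinv_0_lt_compat; lra|apply Rabs_pos].
    + apply Rmult_le_compat_l; [apply Rlt_le, Rinv_0_lt_compat; lra|exact Hp].
  - assert (0 <= a * (Rabs (ln a) + 2 * Rabs gam)) by (pose proof (Rabs_pos (ln a)); pose proof (Rabs_pos gam); nra).
    apply Rle_lt_trans with ((M0 + 1) * (a * (Rabs (ln a) + 2 * Rabs gam))); [nra|].
    replace eps with ((M0 + 1) * (eps / (M0 + 1))) by (field; lra).
    apply Rmult_lt_compat_l; lra.
Qed.

Lemma log_antider_near_infty x gam eps : 0 < x -> 0 < eps ->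
  exists M, 1 <= M /\ forall b, M <= b -> Rabs (log_antider x gam b) < eps.
Proof.
  intros Hx He. destruct F_consts_nonneg as [HM0 [_ [_ HBp]]].
  set (G := Cprim * Rpower x (1 - al) / x).
  assert (HG : 0 <= G).
  { unfold G, Cprim. pose proof (Rpower_pos x (1 - al)).
    apply Rmult_le_pos; [nra|apply Rlt_le, Rinv_0_lt_compat; lra]. }
  destruct (ln_mul_Rpower_eventually_lt (1 - al) (2 * Rabs gam) (eps / (G + 1))) as [M [HM1 HM]].
  { lra. } { pose proof (Rabs_pos gam); lra. } { apply Rdiv_lt_0_compat; lra. }
  exists M. split; [exact HM1|]. intros b Hb. specialize (HM b Hb).
  pose proof (ln_nonneg b ltac:(lra)) as Hln.
  assert (Hw : Rabs (ln b + 2 * gam) <= ln b + 2 * Rabs gam).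
  { eapply Rle_trans; [apply Rabs_triang|]. rewrite Rabs_mult, (Rabs_right 2), (Rabs_right (ln b)) by lra. lra. }
  pose proof (prim_le (x * b) ltac:(nra)) as Hp. rewrite <- Rpower_mult_distr in Hp by lra.
  unfold log_antider. rewrite !Rabs_mult, Rabs_inv, (Rabs_right x) by lra.
  assert (0 <= (ln b + 2 * Rabs gam) * Rpower b (1 - al)).
  { apply Rmult_le_pos; [pose proof (Rabs_pos gam); lra|apply Rlt_le, Rpower_pos]. }
  apply Rle_lt_trans with (G * ((ln b + 2 * Rabs gam) * Rpower b (1 - al))).
  - apply Rle_trans with (/ x * (Cprim * (Rpower x (1 - al) * Rpower b (1 - al))) * (ln b + 2 * Rabs gam)).
    + apply Rmult_le_compat; [| apply Rabs_pos | |exact Hw].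
      * apply Rmult_le_pos; [apply Rlt_le, Rinv_0_lt_compat; lra|apply Rabs_pos].
      * apply Rmult_le_compat_l; [apply Rlt_le, Rinv_0_lt_compat; lra|exact Hp].
    + right. unfold G. field. lra.
  - apply Rle_lt_trans with ((G + 1) * ((ln b + 2 * Rabs gam) * Rpower b (1 - al))); [nra|].
    replace eps with ((G + 1) * (eps / (G + 1))) by (field; lra).
    apply Rmult_lt_compat_l; lra.
Qed.

Lemma improper_int_log_weight x gam : 0 < x ->
  improper_int (fun t => F (x * t) * (ln t + 2 * gam)) (- L / x).
Proof.
  intros Hx. apply improper_int_intro.
  - intros a b Ha Hab. apply ex_RInt_cont. intros z Hz. rewrite Rmin_left in Hz by lra.
    apply continuous_log_weight. lra.
  - intros eps He.
    destruct (improper_int_approx _ _ avg_int (eps / 3 * x) ltac:(nra)) as [d0 [Mh [Hd0 [HMh HL]]]].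
    destruct (log_antider_near_0 x gam (eps / 3) Hx ltac:(lra)) as [d1 [Hd1 Ha1]].
    destruct (log_antider_near_infty x gam (eps / 3) Hx ltac:(lra)) as [Mb [HMb Hb1]].
    exists (Rmin (d0 / x) d1), (Rmax (Mh / x) Mb).
    split; [apply Rmin_case; [apply Rdiv_lt_0_compat|]; lra|].
    split; [pose proof (Rmax_r (Mh / x) Mb); lra|].
    intros a b Ha Had Hb Hab.
    pose proof (Rmin_l (d0 / x) d1). pose proof (Rmin_r (d0 / x) d1).
    pose proof (Rmax_l (Mh / x) Mb). pose proof (Rmax_r (Mh / x) Mb).
    assert (Hxa : x * a < d0).
    { apply Rmult_lt_reg_l with (/ x); [apply Rinv_0_lt_compat; lra|].
      rewrite <- Rmult_assoc, Rinv_l, Rmult_1_l by lra. rewrite Rmult_comm. unfold Rdiv in *. lra. }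
    assert (Hxb : Mh < x * b).
    { apply Rmult_lt_reg_l with (/ x); [apply Rinv_0_lt_compat; lra|].
      rewrite <- Rmult_assoc, Rinv_l, Rmult_1_l by lra. rewrite Rmult_comm. unfold Rdiv in *. lra. }
    rewrite RInt_log_weight by lra.
    specialize (HL (x * a) (x * b) ltac:(nra) Hxa Hxb ltac:(nra)).
    specialize (Ha1 a ltac:(lra)). specialize (Hb1 b ltac:(lra)).
    assert (A3 : Rabs (RInt (avg F) (x * a) (x * b) / x - L / x) < eps / 3).
    { replace (RInt (avg F) (x * a) (x * b) / x - L / x) with ((RInt (avg F) (x * a) (x * b) - L) / x)
        by (field; lra).
      unfold Rdiv at 1. rewrite Rabs_mult, Rabs_inv, (Rabs_right x) by lra.
      apply Rmult_lt_reg_r with x; [lra|]. rewrite Rmult_assoc, Rinv_l by lra. lra. }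
    replace (log_antider x gam b - log_antider x gam a - RInt (avg F) (x * a) (x * b) / x - - L / x)
      with (log_antider x gam b + - log_antider x gam a + - (RInt (avg F) (x * a) (x * b) / x - L / x))
      by (field; lra).
    pose proof (Rabs_triang (log_antider x gam b + - log_antider x gam a)
                            (- (RInt (avg F) (x * a) (x * b) / x - L / x))) as T1.
    pose proof (Rabs_triang (log_antider x gam b) (- log_antider x gam a)) as T2.
    rewrite Rabs_Ropp in T1, T2. lra.
Qed.

End AverageIntegral.

End Average.

(** * Divisor sums *)

Lemma length_filter_seq (p : nat -> bool) s len :
  INR (length (filter p (seq s len))) = sumN (fun m => if p (s + m)%nat then 1 else 0) len.
Proof.
  induction len as [|len IH]; [reflexivity|].
  rewrite seq_S, filter_app, length_app, plus_INR, IH, sumN_S. f_equal.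
  simpl. destruct (p (s + len)%nat); reflexivity.
Qed.

Lemma ndiv_sumN n : INR (ndiv n) = sumN (fun m => if Nat.eqb (n mod (m + 1)) 0 then 1 else 0) n.
Proof.
  unfold ndiv. rewrite length_filter_seq. apply sumN_ext. intros i _.
  replace (1 + i)%nat with (i + 1)%nat by lia. reflexivity.
Qed.

Lemma div_succ K m :
  (S K / (m + 1) = K / (m + 1) + (if Nat.eqb (S K mod (m + 1)) 0 then 1 else 0))%nat /\
  (Nat.eqb (S K mod (m + 1)) 0 = true -> (m + 1) * (S K / (m + 1)) = S K)%nat.
Proof.
  assert (Hm : (m + 1 <> 0)%nat) by lia.
  pose proof (Nat.div_mod K (m + 1) Hm) as E. pose proof (Nat.mod_upper_bound K (m + 1) Hm) as B.
  set (q := (K / (m + 1))%nat) in *. set (r := (K mod (m + 1))%nat) in *.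
  destruct (Nat.eq_dec r m) as [Hr|Hr].
  - assert (Hd : (S K / (m + 1) = q + 1)%nat) by (symmetry; apply (Nat.div_unique _ _ _ 0); lia).
    assert (Hmod : (S K mod (m + 1) = 0)%nat) by (symmetry; apply (Nat.mod_unique _ _ (q + 1) 0); lia).
    rewrite Hd, Hmod. simpl. split; [reflexivity|]. intros _. lia.
  - assert (Hd : (S K / (m + 1) = q)%nat) by (symmetry; apply (Nat.div_unique _ _ _ (r + 1)); lia).
    assert (Hmod : (S K mod (m + 1) = r + 1)%nat) by (symmetry; apply (Nat.mod_unique _ _ q (r + 1)); lia).
    rewrite Hd, Hmod. replace (Nat.eqb (r + 1) 0) with false by (symmetry; apply Nat.eqb_neq; lia).
    split; [lia|]. discriminate.
Qed.

Definition multiple_sum (phi : nat -> R) (m N : nat) : R :=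
  sumN (fun j => phi ((m + 1) * (j + 1))%nat) N.

Lemma multiple_sum_succ phi K m : multiple_sum phi m (S K / (m + 1)) =
  multiple_sum phi m (K / (m + 1)) + (if Nat.eqb (S K mod (m + 1)) 0 then phi (S K) else 0).
Proof.
  destruct (div_succ K m) as [E1 E2].
  destruct (Nat.eqb (S K mod (m + 1)) 0) eqn:Hb.
  - specialize (E2 eq_refl). rewrite E1 in E2 |- *. unfold multiple_sum.
    replace (K / (m + 1) + 1)%nat with (S (K / (m + 1))) in * by lia. rewrite sumN_S.
    do 2 f_equal. rewrite <- E2. f_equal. lia.
  - rewrite E1, Nat.add_0_r. ring.
Qed.

Lemma sumN_ndiv_mul (phi : nat -> R) K :
  sumN (fun k => INR (ndiv (k + 1)) * phi (k + 1)%nat) K =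
  sumN (fun m => multiple_sum phi m (K / (m + 1))) K.
Proof.
  induction K as [|K IH]; [reflexivity|].
  rewrite sumN_S, IH.
  transitivity (sumN (fun m => multiple_sum phi m (K / (m + 1)) +
                  (if Nat.eqb (S K mod (m + 1)) 0 then phi (S K) else 0)) (S K)).
  2:{ apply sumN_ext. intros i _. symmetry. apply multiple_sum_succ. }
  rewrite sumN_plus, (sumN_S (fun m => multiple_sum phi m (K / (m + 1)))).
  replace (multiple_sum phi K (K / (K + 1))) with 0 by (rewrite Nat.div_small by lia; reflexivity).
  rewrite Rplus_0_r. replace (K + 1)%nat with (S K) by lia.
  rewrite ndiv_sumN, Rmult_comm, <- sumN_scal.
  f_equal. apply sumN_ext. intros i _. destruct (Nat.eqb (S K mod (i + 1)) 0); ring.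
Qed.

Section DivisorSeries.

Variables (al c0 l : R) (phi : nat -> R) (gx : nat -> R).
Hypothesis al_gt1 : 1 < al.
Hypothesis phi_decay : forall k, (1 <= k)%nat -> Rabs (phi k) <= c0 * Rpower (INR k) (- al).
Hypothesis gx_sum : forall m, infinite_sum (fun n => phi ((m + 1) * (n + 1))%nat) (gx m).
Hypothesis gx_series : infinite_sum gx l.

Lemma c0_nonneg : 0 <= c0.
Proof.
  apply (nonneg_of_Rabs_le_mult (phi 1%nat) c0 (Rpower (INR 1) (- al))); [apply phi_decay; lia|apply Rpower_pos].
Qed.

Lemma phi_mul_le m n : Rabs (phi ((m + 1) * (n + 1))%nat) <= c0 * pterm al m * pterm al n.
Proof.
  eapply Rle_trans; [apply phi_decay; lia|]. pose proof (pos_INR m). pose proof (pos_INR n).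
  rewrite mult_INR, !INR_add1, <- Rpower_mult_distr by lra. unfold pterm. right. ring.
Qed.

Lemma multiple_sum_tail_le m N : Rabs (gx m - multiple_sum phi m N) <= c0 * pterm al m * pterm_tail al N.
Proof.
  apply (infinite_sum_tail_le _ _ (fun n => c0 * pterm al m * pterm al n)); [apply gx_sum|apply phi_mul_le|].
  intros M. rewrite sumN_from_scal. apply Rmult_le_compat_l.
  - pose proof c0_nonneg. pose proof (Rpower_pos (INR m + 1) (- al)). unfold pterm. nra.
  - apply sumN_from_pterm_tail, al_gt1.
Qed.

(* Hyperbola method: for m < r the inner sums are long (K/(m+1) >= r), and the m >= r
   contribute only a tail of the p-series. *)
Lemma sumN_multiple_sum_le K r : (1 <= r)%nat -> (r * r <= K)%nat ->
  Rabs (sumN gx K - sumN (fun m => multiple_sum phi m (K / (m + 1))) K)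
  <= 2 * c0 * zeta_bound al * (Rpower (INR r) (1 - al) / (al - 1)).
Proof.
  intros Hr HrK. pose proof c0_nonneg as Hc0. pose proof (zeta_bound_pos al al_gt1) as HZ.
  set (Tr := Rpower (INR r) (1 - al) / (al - 1)).
  assert (HTr : 0 <= Tr) by (unfold Tr; apply Rlt_le, Rdiv_lt_0_compat; [apply Rpower_pos|lra]).
  rewrite <- sumN_minus. eapply Rle_trans.
  { apply (sumN_abs_le _ (fun m => c0 * Tr * pterm al m +
                                    c0 * zeta_bound al * (if (r <=? m)%nat then pterm al m else 0))).
    intros m Hm. eapply Rle_trans; [apply multiple_sum_tail_le|].
    assert (Hq : 0 < pterm al m) by apply Rpower_pos.
    destruct (r <=? m)%nat eqn:E.
    - pose proof (pterm_tail_le_zeta al (K / (m + 1)) al_gt1).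
      assert (c0 * pterm al m * pterm_tail al (K / (m + 1)) <= c0 * pterm al m * zeta_bound al)
        by (apply Rmult_le_compat_l; nra).
      assert (0 <= c0 * Tr * pterm al m) by (apply Rmult_le_pos; nra). nra.
    - apply Nat.leb_gt in E.
      assert (Hd : (r <= K / (m + 1))%nat) by (apply Nat.div_le_lower_bound; nia).
      pose proof (pterm_tail_le al (K / (m + 1)) r al_gt1 ltac:(lia)). fold Tr in H.
      assert (c0 * pterm al m * pterm_tail al (K / (m + 1)) <= c0 * pterm al m * Tr)
        by (apply Rmult_le_compat_l; nra). lra. }
  rewrite sumN_plus, !sumN_scal. fold (sumN_from r (pterm al) K).
  pose proof (sumN_pterm_le al K al_gt1). pose proof (sumN_from_pterm_le al r K al_gt1 Hr). fold Tr in H0.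
  assert (c0 * Tr * sumN (pterm al) K <= c0 * Tr * zeta_bound al) by (apply Rmult_le_compat_l; nra).
  assert (c0 * zeta_bound al * sumN_from r (pterm al) K <= c0 * zeta_bound al * Tr)
    by (apply Rmult_le_compat_l; nra).
  nra.
Qed.

Lemma infinite_sum_ndiv : infinite_sum (fun k => INR (ndiv (k + 1)) * phi (k + 1)%nat) l.
Proof.
  pose proof c0_nonneg as Hc0. pose proof (zeta_bound_pos al al_gt1) as HZ.
  apply infinite_sum_sumN. intros eps He.
  destruct (proj1 (infinite_sum_sumN gx l) gx_series (eps / 2) ltac:(lra)) as [N1 HN1].
  set (C := 2 * c0 * zeta_bound al).
  assert (HC : 0 <= C) by (unfold C; nra).
  set (q := eps / 2 * (al - 1) / (C + 1)).
  assert (Hq : 0 < q) by (unfold q; apply Rdiv_lt_0_compat; nra).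
  destruct (Rpower_eventually_lt q (1 - al) Hq ltac:(lra)) as [Y [HY HYy]].
  destruct (INR_unbounded Y) as [r0 Hr0].
  exists (Nat.max N1 (S r0 * S r0)). intros K HK.
  set (r := Nat.sqrt K).
  assert (Hrr : (S r0 <= r)%nat) by (unfold r; rewrite <- (Nat.sqrt_square (S r0)); apply Nat.sqrt_le_mono; lia).
  pose proof (Nat.sqrt_spec K (Nat.le_0_l K)) as [Hsq _]. fold r in Hsq.
  rewrite sumN_ndiv_mul. specialize (HN1 K ltac:(lia)).
  pose proof (sumN_multiple_sum_le K r ltac:(lia) Hsq) as D. fold C in D.
  assert (Hr : Rpower (INR r) (1 - al) < q).
  { apply HYy. apply Rle_trans with (INR r0); [lra|apply le_INR; lia]. }
  assert (C * (Rpower (INR r) (1 - al) / (al - 1)) < eps / 2).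
  { apply Rle_lt_trans with ((C + 1) * (Rpower (INR r) (1 - al) / (al - 1))).
    { pose proof (Rpower_pos (INR r) (1 - al)). apply Rmult_le_compat_r; [apply Rlt_le, Rdiv_lt_0_compat|]; lra. }
    replace (eps / 2) with ((C + 1) * (q / (al - 1))) by (unfold q; field; lra).
    apply Rmult_lt_compat_l; [lra|]. apply Rmult_lt_compat_r; [apply Rinv_0_lt_compat; lra|exact Hr]. }
  pose proof (Rabs_triang (sumN (fun m => multiple_sum phi m (K / (m + 1))) K - sumN gx K) (sumN gx K - l)) as T.
  replace (sumN (fun m => multiple_sum phi m (K / (m + 1))) K - sumN gx K + (sumN gx K - l))
    with (sumN (fun m => multiple_sum phi m (K / (m + 1))) K - l) in T by ring.
  rewrite Rabs_minus_sym in D. lra.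
Qed.

End DivisorSeries.

(** * The class M_alpha and the Muntz operator *)

Lemma continuous_eps_delta (F : R -> R) y : continuous F y <->
  forall eps, 0 < eps -> exists del, 0 < del /\ forall z, Rabs (z - y) < del -> Rabs (F z - F y) < eps.
Proof.
  split.
  - intros H eps He. destruct (proj1 (filterlim_locally F (F y)) H (mkposreal eps He)) as [del Hd].
    exists del. split; [apply cond_pos|]. intros z Hz. apply (Hd z), Hz.
  - intros H. apply filterlim_locally. intros eps.
    destruct (H eps (cond_pos eps)) as [del [Hd Hz]].
    exists (mkposreal del Hd). intros z Hz'. apply Hz, Hz'.
Qed.

Lemma right_deriv_continuous f l : right_deriv f 0 l ->
  forall eps, 0 < eps -> exists del, 0 < del /\ forall h, 0 < h < del -> Rabs (f h - f 0) < eps.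
Proof.
  intros H eps He. destruct (H 1 ltac:(lra)) as [d [Hd Hh]].
  pose proof (Rabs_pos l).
  exists (Rmin d (eps / (Rabs l + 1))). split; [apply Rmin_case; [|apply Rdiv_lt_0_compat]; lra|].
  intros h [Hh0 Hhd]. pose proof (Rmin_l d (eps / (Rabs l + 1))). pose proof (Rmin_r d (eps / (Rabs l + 1))).
  specialize (Hh h Hh0 ltac:(lra)). rewrite Rplus_0_l in Hh.
  assert (Hq : Rabs ((f h - f 0) / h) < Rabs l + 1).
  { pose proof (Rabs_triang ((f h - f 0) / h - l) l) as T.
    replace ((f h - f 0) / h - l + l) with ((f h - f 0) / h) in T by ring. lra. }
  replace (f h - f 0) with (h * ((f h - f 0) / h)) by (field; lra).
  rewrite Rabs_mult, (Rabs_right h) by lra.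
  apply Rlt_le_trans with (h * (Rabs l + 1)); [apply Rmult_lt_compat_l; lra|].
  apply Rmult_le_reg_r with (/ (Rabs l + 1)); [apply Rinv_0_lt_compat; lra|].
  rewrite Rmult_assoc, Rinv_r, Rmult_1_r by lra. unfold Rdiv in *. lra.
Qed.

Definition ext0 (f : R -> R) (y : R) : R := f (Rmax 0 y).

Lemma ext0_eq f y : 0 <= y -> ext0 f y = f y.
Proof. intros; unfold ext0; rewrite Rmax_right; auto. Qed.

Lemma continuous_ext0 f :
  (forall y, 0 < y -> continuous f y) ->
  (forall eps, 0 < eps -> exists del, 0 < del /\ forall h, 0 < h < del -> Rabs (f h - f 0) < eps) ->
  forall y, continuous (ext0 f) y.
Proof.
  intros Hc H0 y. apply continuous_eps_delta. intros eps He.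
  destruct (Rlt_le_dec 0 y) as [Hy|Hy].
  - destruct (proj1 (continuous_eps_delta f y) (Hc y Hy) eps He) as [d [Hd Hz]].
    exists (Rmin d y). split; [apply Rmin_case; lra|]. intros z Hzy.
    pose proof (Rmin_l d y). pose proof (Rmin_r d y).
    assert (0 < z) by (apply Rabs_def2 in Hzy; lra).
    rewrite !ext0_eq by lra. apply Hz. lra.
  - destruct (Req_dec y 0) as [->|Hne].
    + destruct (H0 eps He) as [d [Hd Hz]]. exists d. split; [exact Hd|]. intros z Hz'.
      rewrite (ext0_eq f 0) by lra. unfold ext0.
      destruct (Rle_dec z 0); [rewrite Rmax_left, Rminus_diag, Rabs_R0 by assumption; exact He|].
      rewrite Rmax_right by lra. apply Hz. rewrite Rminus_0_r in Hz'. apply Rabs_def2 in Hz'. lra.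
    + exists (- y). split; [lra|]. intros z Hz. unfold ext0.
      apply Rabs_def2 in Hz. rewrite !Rmax_left, Rminus_diag, Rabs_R0 by lra. exact He.
Qed.

Lemma is_derive_ext0 f f1 y : 0 < y -> derivable_pt_lim f y (f1 y) -> is_derive (ext0 f) y (f1 y).
Proof.
  intros Hy Hd. apply (is_derive_ext_loc f); [|apply is_derive_Reals, Hd].
  exists (mkposreal y Hy). intros z Hz. unfold ext0. rewrite Rmax_right; [reflexivity|].
  change (Rabs (z - y) < y) in Hz. apply Rabs_def2 in Hz. lra.
Qed.

Lemma M_alpha_continuous al f : M_alpha al f -> forall y, 0 < y -> continuous f y.
Proof.
  intros [f1 [f2 [Hd1 _]]] y Hy. apply continuity_pt_filterlim, derivable_continuous_pt.
  exists (f1 y). apply Hd1, Hy.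
Qed.

Lemma M_alpha_decay_from al f x0 : 0 <= al -> 0 < x0 -> M_alpha al f ->
  exists B, 0 <= B /\ forall t, x0 <= t -> Rabs (f t) <= B * Rpower t (- al).
Proof.
  intros Hal Hx0 Hf. pose proof (M_alpha_continuous al f Hf) as Hc.
  destruct Hf as [f1 [f2 [_ [_ [_ [_ [_ [C [X [_ Hdec]]]]]]]]]].
  apply (decay_bound_from f al C X x0 Hal Hx0); [intros z Hz; apply Hc; lra|].
  intros t Ht. apply Hdec, Ht.
Qed.

(* Only f in C^1 (with a right derivative at 0) is used here. *)
Lemma M_alpha_ext0 al f : 0 <= al -> M_alpha al f ->
  (forall y, continuous (ext0 f) y) /\
  (exists M0, forall t, 0 <= t <= 1 -> Rabs (ext0 f t) <= M0) /\
  (exists M1, forall s t, 0 <= s <= 1 -> 0 <= t <= 1 ->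
     Rabs (ext0 f t - ext0 f s) <= M1 * Rabs (t - s)) /\
  (exists Bf, forall t, 1 <= t -> Rabs (ext0 f t) <= Bf * Rpower t (- al)).
Proof.
  intros Hal Hf. pose proof Hf as [f1 [f2 [Hd1 [Hd2 [Hr0 [Hr1 _]]]]]].
  assert (HcF : forall y, continuous (ext0 f) y).
  { apply continuous_ext0; [apply M_alpha_continuous with al, Hf|].
    apply (right_deriv_continuous f (f1 0)), Hr0. }
  assert (HcF1 : forall y, continuous (ext0 f1) y).
  { apply continuous_ext0.
    - intros y Hy. apply continuity_pt_filterlim, derivable_continuous_pt. exists (f2 y). apply Hd2, Hy.
    - apply (right_deriv_continuous f1 (f2 0)), Hr1. }
  split; [exact HcF|]. split.
  { destruct (continuous_bounded (ext0 f) 0 1 ltac:(lra) (fun z _ => HcF z)) as [M0 [_ HM0]]. exists M0. exact HM0. }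
  split.
  - destruct (continuous_bounded (ext0 f1) 0 1 ltac:(lra) (fun z _ => HcF1 z)) as [M1 [_ HbM1]].
    exists M1. intros s t Hs Ht.
    destruct (MVT_gen (ext0 f) s t (ext0 f1)) as [c [Hc Heq]].
    + intros z Hz. assert (Hz0 : 0 < z) by (pose proof (Rmin_case s t (fun u => 0 <= u) ltac:(lra) ltac:(lra)); lra).
      rewrite (ext0_eq f1 z) by lra. apply is_derive_ext0, Hd1; exact Hz0.
    + intros z Hz. apply continuity_pt_filterlim, HcF.
    + rewrite Heq, Rabs_mult. apply Rmult_le_compat_r; [apply Rabs_pos|]. apply HbM1. split.
      * pose proof (Rmin_case s t (fun u => 0 <= u) ltac:(lra) ltac:(lra)). lra.
      * pose proof (Rmax_case s t (fun u => u <= 1) ltac:(lra) ltac:(lra)). lra.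
  - destruct (M_alpha_decay_from al f 1 Hal ltac:(lra) Hf) as [Bf [_ HBf]].
    exists Bf. intros t Ht. rewrite ext0_eq by lra. apply HBf, Ht.
Qed.

Section MuntzMean.

Variables (al Bf Bg : R) (f g : R -> R).
Hypothesis al_gt1 : 1 < al.
Hypothesis f_decay : forall t, 1 <= t -> Rabs (f t) <= Bf * Rpower t (- al).
Hypothesis g_decay : forall t, 1 <= t -> Rabs (g t) <= Bg * Rpower t (- al).
Hypothesis g_muntz : forall y, 0 < y -> Muntz_at f y (g y).

(* (1/y) int f = sum_n f(ny) - (Pf)(y) = O(y^-al), so the integral is O(y^(1-al)) for all large y. *)
Lemma muntz_integral_zero I : improper_int f I -> I = 0.
Proof.
  intros HI. set (K := Bf * zeta_bound al + Bg).
  assert (HKI : forall y, 1 <= y -> Rabs I <= K * Rpower y (1 - al)).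
  { intros y Hy. destruct (g_muntz y ltac:(lra)) as [Sy [Iy [Hsy [HIy Hgy]]]].
    rewrite (improper_int_unique f I Iy HI HIy).
    assert (HS : Rabs Sy <= Bf * Rpower y (- al) * zeta_bound al).
    { apply (infinite_sum_pterm_le al _ _ _ al_gt1 Hsy). intros n.
      apply (dilate_term_le al Bf f y y n); [lra|lra|intros; apply f_decay; lra]. }
    pose proof (g_decay y Hy).
    assert (E : Iy = y * (Sy - g y)) by (rewrite Hgy; field; lra). rewrite E.
    rewrite Rabs_mult, (Rabs_right y), Rpower_1_minus by lra.
    pose proof (Rabs_triang Sy (- g y)) as T. rewrite Rabs_Ropp in T.
    replace (K * (y * Rpower y (- al))) with (y * (K * Rpower y (- al))) by ring.
    apply Rmult_le_compat_l; [lra|]. unfold Rminus. eapply Rle_trans; [exact T|]. unfold K. nra. }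
  assert (HK : 0 <= K).
  { unfold K. pose proof (zeta_bound_pos al al_gt1).
    assert (0 <= Bf) by (apply (nonneg_of_Rabs_le_mult (f 1) Bf (Rpower 1 (- al))); [apply f_decay; lra|apply Rpower_pos]).
    assert (0 <= Bg) by (apply (nonneg_of_Rabs_le_mult (g 1) Bg (Rpower 1 (- al))); [apply g_decay; lra|apply Rpower_pos]).
    nra. }
  apply Rabs_eq_0, Rle_antisym; [|apply Rabs_pos]. apply Rnot_lt_le. intros Hpos.
  destruct (Rpower_eventually_lt (Rabs I / (K + 1)) (1 - al)) as [Y [HY HYy]].
  { apply Rdiv_lt_0_compat; lra. } { lra. }
  specialize (HKI (Rmax 1 Y) (Rmax_l 1 Y)). specialize (HYy (Rmax 1 Y) (Rmax_r 1 Y)).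
  pose proof (Rpower_pos (Rmax 1 Y) (1 - al)).
  assert (K * Rpower (Rmax 1 Y) (1 - al) < Rabs I).
  { apply Rle_lt_trans with ((K + 1) * Rpower (Rmax 1 Y) (1 - al)); [nra|].
    replace (Rabs I) with ((K + 1) * (Rabs I / (K + 1))) by (field; lra).
    apply Rmult_lt_compat_l; lra. }
  lra.
Qed.

Lemma muntz_series y : 0 < y -> infinite_sum (fun n => f (INR (n + 1) * y)) (g y).
Proof.
  intros Hy. destruct (g_muntz y Hy) as [Sy [Iy [Hsy [HIy Hgy]]]].
  rewrite (muntz_integral_zero Iy HIy), Rdiv_0_l, Rminus_0_r in Hgy. rewrite Hgy. exact Hsy.
Qed.

End MuntzMean.

Lemma prim_vanish_of_improper_int F M0 : (forall y, continuous F y) ->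
  (forall t, 0 <= t <= 1 -> Rabs (F t) <= M0) -> improper_int F 0 ->
  forall eps, 0 < eps -> exists M, forall b, M < b -> Rabs (prim F b) < eps.
Proof.
  intros Hc Hb HI eps He. destruct (improper_int_approx F 0 HI (eps / 2) ltac:(lra)) as [d [M [Hd [HM Hlim]]]].
  assert (HM0 : 0 <= M0) by (specialize (Hb 0 ltac:(lra)); pose proof (Rabs_pos (F 0)); lra).
  exists (Rmax M 1). intros b Hb'. pose proof (Rmax_l M 1). pose proof (Rmax_r M 1).
  set (a := Rmin (Rmin (d / 2) (eps / (2 * (M0 + 1)))) (1 / 2)).
  pose proof (Rmin_l (Rmin (d / 2) (eps / (2 * (M0 + 1)))) (1 / 2)).
  pose proof (Rmin_l (d / 2) (eps / (2 * (M0 + 1)))). pose proof (Rmin_r (d / 2) (eps / (2 * (M0 + 1)))).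
  assert (Ha : 0 < a).
  { unfold a. repeat apply Rmin_case; try lra. apply Rdiv_lt_0_compat; lra. }
  assert (Ha1 : a <= 1 / 2) by apply Rmin_r.
  specialize (Hlim a b Ha ltac:(unfold a in *; lra) ltac:(lra) ltac:(lra)). rewrite Rminus_0_r in Hlim.
  rewrite <- (prim_sub F Hc a b) in Hlim.
  pose proof (prim_le_small M0 F Hc Hb a ltac:(lra)) as Hp.
  assert (M0 * a <= eps / 2).
  { apply Rle_trans with ((M0 + 1) * (eps / (2 * (M0 + 1)))).
    - apply Rmult_le_compat; [lra|lra|lra|unfold a in *; lra].
    - right. field. lra. }
  pose proof (Rabs_triang (prim F a) (prim F b - prim F a)) as T.
  replace (prim F a + (prim F b - prim F a)) with (prim F b) in T by ring. lra.
Qed.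

Lemma ex_dilation_series al g x : 1 < al -> 0 < x -> M_alpha al g ->
  exists l, infinite_sum (fun m => g (INR (m + 1) * x)) l.
Proof.
  intros Hal Hx Hg. destruct (M_alpha_decay_from al g x ltac:(lra) Hx Hg) as [B [_ HB]].
  apply (ex_infinite_sum_pterm al _ (B * Rpower x (- al)) Hal). intros m.
  apply (dilate_term_le al B g x x m); [lra|lra|exact HB].
Qed.

Lemma voronoi_series al f g x l : 1 < al -> 0 < x -> M_alpha al f ->
  (forall y, 0 < y -> infinite_sum (fun n => f (INR (n + 1) * y)) (g y)) ->
  infinite_sum (fun m => g (INR (m + 1) * x)) l ->
  infinite_sum (fun k => INR (ndiv (k + 1)) * f (INR (k + 1) * x)) l.
Proof.
  intros Hal Hx Hf Hsum Hl. destruct (M_alpha_decay_from al f x ltac:(lra) Hx Hf) as [B [HB0 HB]].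
  apply (infinite_sum_ndiv al (B * Rpower x (- al)) l (fun k => f (INR k * x)) (fun m => g (INR (m + 1) * x)) Hal);
    [|intros m|exact Hl].
  - intros k Hk. assert (1 <= INR k) by (apply (le_INR 1); exact Hk).
    eapply Rle_trans; [apply HB; nra|]. rewrite <- Rpower_mult_distr by lra. right. ring.
  - eapply infinite_sum_ext; [|apply Hsum; rewrite INR_add1; pose proof (pos_INR m); nra].
    intros n. cbv beta. f_equal. rewrite mult_INR. ring.
Qed.

Lemma voronoi_eq_muntz_muntz al gam f g : 1 < al -> M_alpha al f ->
  (forall y, 0 < y -> Muntz_at f y (g y)) -> M_alpha al g ->
  forall x, 0 < x -> exists y, Voronoi_at gam f x y /\ Muntz_at g x y.
Proof.
  intros Hal Hf HM Hg x Hx.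
  destruct (M_alpha_ext0 al f ltac:(lra) Hf) as [HcF [[M0 HM0] [[M1 HM1] [Bf HBf]]]].
  assert (Hext : forall t, 0 < t -> ext0 f t = f t) by (intros; apply ext0_eq; lra).
  assert (Hfdec : forall t, 1 <= t -> Rabs (f t) <= Bf * Rpower t (- al)) by (intros t Ht; rewrite <- Hext by lra; auto).
  destruct (M_alpha_decay_from al g 1 ltac:(lra) ltac:(lra) Hg) as [Bg [_ Hgdec]].
  pose proof (muntz_series al Bf Bg f g Hal Hfdec Hgdec HM) as Hsum.
  assert (HF0 : improper_int (ext0 f) 0).
  { destruct (HM 1 ltac:(lra)) as [_ [I [_ [HI _]]]].
    rewrite (muntz_integral_zero al Bf Bg f g Hal Hfdec Hgdec HM I HI) in HI.
    apply improper_int_ext with f; [intros; symmetry; auto|exact HI]. }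
  pose proof (prim_vanish_of_improper_int (ext0 f) M0 HcF HM0 HF0) as Hvanish.
  destruct (ex_improper_avg al M0 M1 Bf (ext0 f) Hal HcF HM0 HM1 HBf Hvanish) as [L HL].
  assert (HgL : improper_int g (- L)).
  { apply (improper_int_dilation_series al M0 M1 Bf (ext0 f) Hal HcF HM0 HM1 HBf Hvanish L HL g).
    - apply M_alpha_continuous with al, Hg.
    - intros y Hy. eapply infinite_sum_ext; [|apply Hsum, Hy].
      intros n. symmetry. apply Hext. rewrite INR_add1. pose proof (pos_INR n). nra. }
  assert (HvL : improper_int (fun t => f (x * t) * (ln t + 2 * gam)) (- L / x)).
  { apply improper_int_ext with (fun t => ext0 f (x * t) * (ln t + 2 * gam)).
    - intros t Ht. rewrite Hext by nra. reflexivity.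
    - exact (improper_int_log_weight al M0 M1 Bf (ext0 f) Hal HcF HM0 HM1 HBf Hvanish L HL x gam Hx). }
  destruct (ex_dilation_series al g x Hal Hx Hg) as [l Hl].
  exists (l + L / x). split.
  - exists l, (- L / x). split; [exact (voronoi_series al f g x l Hal Hx Hf Hsum Hl)|].
    split; [exact HvL|]. field. lra.
  - exists l, (- L). split; [exact Hl|]. split; [exact HgL|]. field. lra.
Qed.

Theorem corollary2 (alpha gamma : R) (fr fi gr gi : R -> R) :
  1 < alpha ->
  is_euler_gamma gamma ->
  M_alpha_C alpha fr fi ->
  (forall x, 0 < x -> Muntz_at fr x (gr x) /\ Muntz_at fi x (gi x)) ->
  M_alpha_C alpha gr gi ->
  forall x, 0 < x ->
    exists yr yi,
      Voronoi_at gamma fr x yr /\ Muntz_at gr x yr /\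
      Voronoi_at gamma fi x yi /\ Muntz_at gi x yi.
Proof.
  intros Hal _ [Hfr Hfi] HM [Hgr Hgi] x Hx.
  destruct (voronoi_eq_muntz_muntz alpha gamma fr gr Hal Hfr (fun y Hy => proj1 (HM y Hy)) Hgr x Hx)
    as [yr [Hvr Hmr]].
  destruct (voronoi_eq_muntz_muntz alpha gamma fi gi Hal Hfi (fun y Hy => proj2 (HM y Hy)) Hgi x Hx)
    as [yi [Hvi Hmi]].
  exists yr, yi. auto.
Qed.
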